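(* In the Coxeter arrangement of type $D_n$ ($n\ge2$): for $1\le i<j\le n$ the hyperplane $H_{i,j}=\{x_i=x_j\}$ has exactly $2^{j-i-1}$ shards, and the hyperplane $H_{i,-j}=\{x_i=-x_j\}$ has exactly $2^{j-i}3^{i-1}-2^{j-2}$ shards. Consequently the arrangement has $\sum_{1\le i<j\le n}\big(2^{j-i-1}+2^{j-i}3^{i-1}-2^{j-2}\big)=3^n-n2^{n-1}-n-1$ shards in total.
   Context: Shards. Let $V$ be a real Euclidean space with inner product $\langle\cdot,\cdot\rangle$, $\Phi\subset V$ a finite root system with a chosen set of positive roots $\Phi^+$, and $\mathcal A=\{H_\beta:\beta\in\Phi^+\}$ with $H_\beta=\{\lambda\in V:\langle\lambda,\beta\rangle=0\}$ (the Coxeter arrangement). The base region is $B=\{\lambda\in V:\langle\lambda,\beta\rangle>0\text{ for all }\beta\in\Phi^+\}$. For distinct $H,H'\in\mathcal A$ let $\mathcal A(H,H')$ be the set of hyperplanes of $\mathcal A$ containing $H\cap H'$ (a rank two subarrangement). Exactly one connected component $B'$ of $V\setminus\bigcup\mathcal A(H,H')$ contains $B$, and exactly two hyperplanes of $\mathcal A(H,H')$ contain facets of the closure of $B'$; these are the basic hyperplanes of $\mathcal A(H,H')$. Each non-basic $H''\in\mathcal A(H,H')$ is said to be cut by each of the two basic hyperplanes of $\mathcal A(H,H')$. For $H\in\mathcal A$ let $L_H$ be the set of hyperplanes of $\mathcal A$ that cut $H$ in some rank two subarrangement; the shards of $H$ are the closures of the connected components of $H\setminus\bigcup_{H_\gamma\in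 L_H}(H\cap H_\gamma)$. A shard of $\mathcal A$ is a shard of some $H\in\mathcal A$. Type $D_n$: $V=\mathbb R^n$ with the standard inner product, $\Phi^+=\{\varepsilon_j\pm\varepsilon_i:1\le i<j\le n\}$, base region $B=\{-x_2<\pm x_1<x_2<\cdots<x_n\}$; the hyperplanes are $H_{i,j}=\{x_i=x_j\}$ (root $\varepsilon_j-\varepsilon_i$) and $H_{i,-j}=\{x_i=-x_j\}$ (root $\varepsilon_j+\varepsilon_i$), $1\le i<j\le n$. *)

From Stdlib Require Import Reals Arith List.
Open Scope R_scope.

(** Points of V = R^n are represented by functions nat -> R whose
    coordinates 1..n are the meaningful ones; all other coordinates vanish. *)
Definition vec := nat -> R.

Definition in_V (n : nat) (x : vec) : Prop :=
  forall k, (k = 0%nat \/ (n < k)%nat) -> x k = 0.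

Fixpoint ip (n : nat) (x y : vec) : R :=
  match n with
  | O => 0
  | S m => ip m x y + x n * y n
  end.

Definition vsub (x y : vec) : vec := fun k => x k - y k.
Definition vadd (x y : vec) : vec := fun k => x k + y k.

Definition closure (n : nat) (S : vec -> Prop) : vec -> Prop :=
  fun x => in_V n x /\
    forall eps, 0 < eps -> exists y, S y /\ ip n (vsub x y) (vsub x y) < eps * eps.

Definition path_in (S : vec -> Prop) (x y : vec) : Prop :=
  exists g : R -> vec,
    (forall k, continuity (fun t => g t k)) /\
    (forall k, g 0 k = x k) /\ (forall k, g 1 k = y k) /\
    (forall t, 0 <= t <= 1 -> S (g t)).

Definition component (S : vec -> Prop) (x : vec) : vec -> Prop :=
  fun y => S x /\ path_in S x y.

Definition Hyp (n : nat) (beta : vec) : vec -> Prop :=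
  fun l => in_V n l /\ ip n l beta = 0.

Definition same_set (A B : vec -> Prop) : Prop := forall x, A x <-> B x.


Definition base_region (n : nat) (Phi : list vec) : vec -> Prop :=
  fun l => in_V n l /\ forall b, In b Phi -> ip n l b > 0.

(** gamma's hyperplane belongs to the rank-two subarrangement A(H_b1, H_b2):
    it contains H_b1 ∩ H_b2 *)
Definition in_A2 (n : nat) (Phi : list vec) (b1 b2 g : vec) : Prop :=
  In g Phi /\ forall x, Hyp n b1 x -> Hyp n b2 x -> Hyp n g x.

Definition A2_complement (n : nat) (Phi : list vec) (b1 b2 : vec) : vec -> Prop :=
  fun x => in_V n x /\ forall g, in_A2 n Phi b1 b2 g -> ~ Hyp n g x.

Definition Bprime (n : nat) (Phi : list vec) (b1 b2 : vec) : vec -> Prop :=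
  fun y => exists b, base_region n Phi b /\
    component (A2_complement n Phi b1 b2) b y.

(** the hyperplane H contains a facet of the closed polyhedral cone C:
    C ∩ H contains a nonempty relatively open subset of H
    (i.e. C ∩ H is a face of codimension one lying in H) *)
Definition contains_facet (n : nat) (H C : vec -> Prop) : Prop :=
  exists p, H p /\ exists eps, 0 < eps /\
    forall q, H q -> ip n (vsub p q) (vsub p q) < eps * eps -> C q.

Definition basic (n : nat) (Phi : list vec) (b1 b2 g : vec) : Prop :=
  in_A2 n Phi b1 b2 g /\
  contains_facet n (Hyp n g) (closure n (Bprime n Phi b1 b2)).

Definition cuts (n : nat) (Phi : list vec) (g b : vec) : Prop :=
  exists b1 b2, In b1 Phi /\ In b2 Phi /\
    ~ same_set (Hyp n b1) (Hyp n b2) /\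
    in_A2 n Phi b1 b2 b /\ ~ basic n Phi b1 b2 b /\ basic n Phi b1 b2 g.

Definition shard_domain (n : nat) (Phi : list vec) (b : vec) : vec -> Prop :=
  fun x => Hyp n b x /\ forall g, In g Phi -> cuts n Phi g b -> ~ Hyp n g x.

Definition is_shard_of (n : nat) (Phi : list vec) (b : vec) (S : vec -> Prop) : Prop :=
  exists x, shard_domain n Phi b x /\
    same_set S (closure n (component (shard_domain n Phi b) x)).

Definition is_shard (n : nat) (Phi : list vec) (S : vec -> Prop) : Prop :=
  exists b, In b Phi /\ is_shard_of n Phi b S.

Definition num_sets (P : (vec -> Prop) -> Prop) (N : nat) : Prop :=
  exists f : nat -> (vec -> Prop),
    (forall k, (k < N)%nat -> P (f k)) /\
    (forall k l, (k < N)%nat -> (l < N)%nat -> same_set (f k) (f l) -> k = l) /\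
    (forall S, P S -> exists k, (k < N)%nat /\ same_set S (f k)).

Definition eps (i : nat) : vec := fun k => if Nat.eqb k i then 1 else 0.

(** root eps_j - eps_i, hyperplane H_{i,j} = {x_i = x_j} *)
Definition root_minus (i j : nat) : vec := vsub (eps j) (eps i).
(** root eps_j + eps_i, hyperplane H_{i,-j} = {x_i = -x_j} *)
Definition root_plus (i j : nat) : vec := vadd (eps j) (eps i).

Definition PhiD (n : nat) : list vec :=
  flat_map (fun j => flat_map (fun i => root_minus i j :: root_plus i j :: nil)
                              (seq 1 (j - 1)))
           (seq 1 n).

Definition sum_pairs (n : nat) (F : nat -> nat -> nat) : nat :=
  list_sum (map (fun j => list_sum (map (fun i => F i j) (seq 1 (j - 1)))) (seq 1 n)).

From Stdlib Require Import Reals Arith List Lra Lia Psatz Classical FunctionalExtensionality FinFun.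

(** Everything is made explicit through sign vectors.

  - The inner product [ip n] is a symmetric bilinear positive form
    (Cauchy-Schwarz included).
  - A "cell" is the set of points of V lying on some hyperplanes and off
    finitely many others.  Its path components are exactly the classes of
    points having the same signs on the avoided hyperplanes (straight
    segments connect points with equal signs, the intermediate value
    theorem separates the others), and the closure of a component is cut
    out by the corresponding weak inequalities.
  - In D_n all roots have norm 2 and pairwise inner products in {-1,0,1}.
    A rank-two subarrangement A(H_b1,H_b2) consists of the roots in the
    span of b1, b2; the region B' is the open cone where these roots are
    positive; a hyperplane is basic iff some point of it is positive on
    the other roots of the subarrangement.  This yields the key
    characterisation: H_g cuts H_b iff b - g is again a positive root.
  - The shards of H_b are the closures of the components of the cell
    "on H_b, off the hyperplanes cutting H_b", hence are counted by the
    realised sign vectors of the cutting forms.  For H_{i,j} these are all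
    2^(j-i-1) sign choices of x_k - x_i (i<k<j); for H_{i,-j} they are
    2^(j-i-1) choices for i<k<j times 2*3^(i-1) - 2^(i-1) admissible
    positions of x_k relative to x_j and -x_j for k<i.
  - Shards of distinct hyperplanes are distinct, so the total count is the
    sum, which is then put in closed form by induction on n. *)

Open Scope R_scope.

Lemma ip_ext_l n x x' y :
  (forall k, (1 <= k <= n)%nat -> x k = x' k) -> ip n x y = ip n x' y.
Proof.
  induction n; simpl; intros H; auto.
  rewrite IHn by (intros; apply H; lia). rewrite (H (S n)) by lia. auto.
Qed.

Lemma ip_ext_r n x y y' :
  (forall k, (1 <= k <= n)%nat -> y k = y' k) -> ip n x y = ip n x y'.
Proof.
  induction n; simpl; intros H; auto.
  rewrite IHn by (intros; apply H; lia). rewrite (H (S n)) by lia. auto.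
Qed.

Lemma ip_sym n x y : ip n x y = ip n y x.
Proof. induction n; simpl; auto. rewrite IHn; ring. Qed.

Lemma ip_lin_l n a b x y z :
  ip n (fun k => a * x k + b * y k) z = a * ip n x z + b * ip n y z.
Proof. induction n; simpl. ring. rewrite IHn; ring. Qed.

Lemma ip_lin_r n a b x y z :
  ip n z (fun k => a * x k + b * y k) = a * ip n z x + b * ip n z y.
Proof. rewrite ip_sym, ip_lin_l, (ip_sym n x), (ip_sym n y); auto. Qed.

Lemma ip_vsub_l n x y z : ip n (vsub x y) z = ip n x z - ip n y z.
Proof. unfold vsub. induction n; simpl. ring. rewrite IHn; ring. Qed.

Lemma ip_vsub_r n x y z : ip n z (vsub x y) = ip n z x - ip n z y.
Proof. rewrite ip_sym, ip_vsub_l, !(ip_sym n z); auto. Qed.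

Lemma ip_vadd_r n x y z : ip n z (vadd x y) = ip n z x + ip n z y.
Proof. unfold vadd. induction n; simpl. ring. rewrite IHn; ring. Qed.

Lemma ip_opp_r n x z : ip n z (fun k => - x k) = - ip n z x.
Proof. induction n; simpl. ring. rewrite IHn; ring. Qed.

Lemma ip_zero_l n y : ip n (fun _ => 0) y = 0.
Proof. induction n; simpl; auto; rewrite IHn; ring. Qed.

Lemma ip_zero_r n y : ip n y (fun _ => 0) = 0.
Proof. rewrite ip_sym; apply ip_zero_l. Qed.

Lemma ip_nonneg n x : 0 <= ip n x x.
Proof. induction n; simpl. lra. nra. Qed.

Lemma ip_self_zero n x : ip n x x = 0 -> forall k, (1 <= k <= n)%nat -> x k = 0.
Proof.
  induction n; simpl; intros H k Hk. lia.
  pose proof (ip_nonneg n x). assert (x (S n) * x (S n) = 0) by nra.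
  assert (ip n x x = 0) by nra.
  destruct (Nat.eq_dec k (S n)). subst. nra. apply IHn; auto; lia.
Qed.

Lemma cauchy_schwarz n x y : ip n x y * ip n x y <= ip n x x * ip n y y.
Proof.
  destruct (Req_dec (ip n y y) 0) as [E|E].
  - rewrite (ip_ext_r n x y (fun _ => 0)) by (apply ip_self_zero; auto).
    rewrite ip_zero_r, E; lra.
  - pose proof (ip_nonneg n y) as Hy.
    set (s := ip n x y / ip n y y).
    pose proof (ip_nonneg n (fun k => 1 * x k + (- s) * y k)) as H0.
    rewrite ip_lin_l, !ip_lin_r, (ip_sym n y x) in H0.
    assert (Hs : s * ip n y y = ip n x y) by (unfold s; field; lra).
    nra.
Qed.

(** The displacement by a small multiple of w stays in the eps-ball. *)
Lemma ip_small_shift n w e :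
  0 < e -> exists s, 0 < s /\ s * s * ip n w w < e * e.
Proof.
  intros He. pose proof (ip_nonneg n w) as HW.
  exists (e / (ip n w w + 1)). split. apply Rdiv_lt_0_compat; lra.
  set (s := e / (ip n w w + 1)).
  assert (Hs : s * (ip n w w + 1) = e) by (unfold s; field; lra).
  assert (0 < s) by (unfold s; apply Rdiv_lt_0_compat; lra). nra.
Qed.

Lemma ip_eps_r n x m : (1 <= m <= n)%nat -> ip n x (eps m) = x m.
Proof.
  induction n; intros H; simpl. lia.
  destruct (Nat.eq_dec m (S n)).
  - subst. unfold eps at 2. rewrite Nat.eqb_refl.
    rewrite (ip_ext_r n x _ (fun _ => 0)), ip_zero_r. ring.
    intros k Hk. unfold eps. destruct (Nat.eqb_spec k (S n)); auto; lia.
  - assert (E : eps m (S n) = 0) by (unfold eps; destruct (Nat.eqb_spec (S n) m); auto; lia).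
    rewrite E, IHn by lia; ring.
Qed.

Lemma ip_minus n x i j :
  (1 <= i <= n)%nat -> (1 <= j <= n)%nat -> ip n x (root_minus i j) = x j - x i.
Proof. intros. unfold root_minus. rewrite ip_vsub_r, !ip_eps_r; auto. Qed.

Lemma ip_plus n x i j :
  (1 <= i <= n)%nat -> (1 <= j <= n)%nat -> ip n x (root_plus i j) = x j + x i.
Proof. intros. unfold root_plus. rewrite ip_vadd_r, !ip_eps_r; auto. Qed.

Lemma ip_continuous n (g : R -> vec) y :
  (forall k, continuity (fun t => g t k)) -> continuity (fun t => ip n (g t) y).
Proof.
  intros H. induction n; simpl.
  - apply continuity_const. intros ? ?; auto.
  - apply continuity_plus; auto. apply continuity_mult; auto.
    apply continuity_const; intros ? ?; auto.
Qed.

(** ** Cells and their components *)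

Definition cell (n : nat) (Z L : list vec) (P : vec -> Prop) (x : vec) : Prop :=
  in_V n x /\ (forall z, In z Z -> ip n x z = 0) /\
  (forall g, In g L -> P g -> ip n x g <> 0).

Definition same_side (n : nat) (L : list vec) (P : vec -> Prop) (x y : vec) : Prop :=
  forall g, In g L -> P g -> (0 < ip n x g <-> 0 < ip n y g).

Lemma same_side_refl n L P x : same_side n L P x x.
Proof. intros g _ _; tauto. Qed.

Lemma same_side_sym n L P x y : same_side n L P x y -> same_side n L P y x.
Proof. intros A g Hg Pg. rewrite (A g Hg Pg). tauto. Qed.

Lemma same_side_trans n L P x y z :
  same_side n L P x y -> same_side n L P y z -> same_side n L P x z.
Proof. intros A B g Hg Pg. rewrite (A g Hg Pg). auto. Qed.

Lemma path_mono (S S' : vec -> Prop) x y :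
  (forall z, S z -> S' z) -> path_in S x y -> path_in S' x y.
Proof. intros H [g [H1 [H2 [H3 H4]]]]. exists g; repeat split; auto. Qed.

Lemma component_ext (S S' : vec -> Prop) x y :
  same_set S S' -> (component S x y <-> component S' x y).
Proof.
  intros H; unfold component; split; intros [A B]; split;
    try (apply H; auto); eapply path_mono; try exact B; intros; apply H; auto.
Qed.

Lemma sign_constant (f : R -> R) :
  continuity f -> (forall t, 0 <= t <= 1 -> f t <> 0) -> (0 < f 0 <-> 0 < f 1).
Proof.
  intros Hc Hn.
  assert (H0 := Hn 0 ltac:(lra)). assert (H1 := Hn 1 ltac:(lra)).
  split; intros H.
  - destruct (Rlt_dec 0 (f 1)); auto. exfalso.
    destruct (IVT (fun t => - f t) 0 1) as [z [Hz Hz']];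
      [apply continuity_opp; auto | lra | lra | lra |].
    apply (Hn z Hz). lra.
  - destruct (Rlt_dec 0 (f 0)); auto. exfalso.
    destruct (IVT f 0 1) as [z [Hz Hz']]; auto; try lra. apply (Hn z Hz); auto.
Qed.

(** Path components of a cell are the sign classes: the segment joining two
    points with equal signs stays in the cell. *)
Lemma component_cell_iff n Z L P x y :
  component (cell n Z L P) x y <->
  (cell n Z L P x /\ cell n Z L P y /\ same_side n L P x y).
Proof.
  split.
  - intros [Hx [g [Hc [H0 [H1 H2]]]]].
    assert (E0 : g 0 = x) by (apply functional_extensionality; auto).
    assert (E1 : g 1 = y) by (apply functional_extensionality; auto).
    split; auto. split. rewrite <- E1; apply H2; lra.
    intros h Hh Ph. rewrite <- E0, <- E1.
    apply (sign_constant (fun t => ip n (g t) h)). apply ip_continuous; auto.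
    intros t Ht. apply (H2 t Ht); auto.
  - intros [Hx [Hy Hs]]. split; auto.
    destruct Hx as [Vx [Zx Nx]]; destruct Hy as [Vy [Zy Ny]].
    exists (fun t k => (1 - t) * x k + t * y k). repeat split.
    + intros k. reg.
    + intros k; simpl; ring.
    + intros k; simpl; ring.
    + intros k Hk. rewrite Vx, Vy; auto; ring.
    + intros z Hz. rewrite ip_lin_l, Zx, Zy; auto; ring.
    + intros h Hh Ph. rewrite ip_lin_l.
      specialize (Hs h Hh Ph). specialize (Nx h Hh Ph). specialize (Ny h Hh Ph).
      destruct (Rlt_dec 0 (ip n x h)).
      * assert (0 < ip n y h) by tauto. nra.
      * assert (ip n y h < 0) by (destruct (Rlt_dec 0 (ip n y h)); [tauto | lra]).
        nra.
Qed.

Lemma component_cell_same n Z L P x y :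
  cell n Z L P x -> cell n Z L P y -> same_side n L P x y ->
  same_set (component (cell n Z L P) x) (component (cell n Z L P) y).
Proof.
  intros Dx Dy Sxy z. rewrite !component_cell_iff. split; intros [_ [Dz S]].
  - split; [|split]; auto. apply (same_side_trans n L P y x z); auto using same_side_sym.
  - split; [|split]; auto. apply (same_side_trans n L P x y z); auto.
Qed.

Lemma closure_ge (n : nat) (S : vec -> Prop) g y :
  (forall z, S z -> 0 <= ip n z g) -> closure n S y -> 0 <= ip n y g.
Proof.
  intros HS [Vy Hy]. destruct (Rle_dec 0 (ip n y g)) as [|Hn]; auto. exfalso.
  set (a := - ip n y g). assert (Ha : 0 < a) by (unfold a; lra).
  pose proof (ip_nonneg n g) as Gg.
  set (e := a / (ip n g g + 1)).
  assert (He : e * (ip n g g + 1) = a) by (unfold e; field; lra).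
  destruct (Hy e) as [z [Sz Dz]]. { apply Rdiv_lt_0_compat; lra. }
  specialize (HS z Sz).
  pose proof (cauchy_schwarz n (vsub y z) g) as C. rewrite ip_vsub_l in C.
  pose proof (ip_nonneg n (vsub y z)).
  assert (a * a <= (ip n y g - ip n z g) * (ip n y g - ip n z g)) by (unfold a in *; nra).
  assert (0 < e) by (unfold e; apply Rdiv_lt_0_compat; lra).
  assert (a * a <= e * e * ip n g g) by nra.
  nra.
Qed.

Lemma closure_eq_zero (n : nat) (S : vec -> Prop) g y :
  (forall z, S z -> ip n z g = 0) -> closure n S y -> ip n y g = 0.
Proof.
  intros HS C.
  pose proof (closure_ge n S g y (fun z Sz => Req_le _ _ (eq_sym (HS z Sz))) C).
  pose proof (closure_ge n S (fun k => - g k) y) as G. rewrite ip_opp_r in G.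
  enough (0 <= - ip n y g) by lra.
  apply G; auto. intros z Sz. rewrite ip_opp_r, (HS z Sz). lra.
Qed.

Lemma closure_self n (S : vec -> Prop) x : in_V n x -> S x -> closure n S x.
Proof.
  intros V Sx. split; auto. intros e He. exists x. split; auto.
  rewrite (ip_ext_l n _ (fun _ => 0)), ip_zero_l. nra.
  intros k _. unfold vsub; ring.
Qed.

Lemma closure_ext n (S S' : vec -> Prop) :
  same_set S S' -> same_set (closure n S) (closure n S').
Proof.
  intros H y. split; intros [V C]; split; auto; intros e He;
    destruct (C e He) as [z [Sz Dz]]; exists z; split; auto; apply H; auto.
Qed.

Lemma closure_cone n (S : vec -> Prop) (L : list vec) (P : vec -> Prop) b0 y :
  (forall z, in_V n z -> (forall g, In g L -> P g -> 0 < ip n z g) -> S z) ->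
  in_V n b0 -> (forall g, In g L -> P g -> 0 < ip n b0 g) ->
  in_V n y -> (forall g, In g L -> P g -> 0 <= ip n y g) -> closure n S y.
Proof.
  intros HS V0 P0 Vy Py. split; auto. intros e He.
  destruct (ip_small_shift n b0 e He) as [t [Ht Dt]].
  exists (fun k => 1 * y k + t * b0 k). split.
  - apply HS.
    + intros k Hk. rewrite Vy, V0; auto; ring.
    + intros g Hg Pg. rewrite ip_lin_l.
      specialize (Py g Hg Pg). specialize (P0 g Hg Pg). nra.
  - rewrite (ip_ext_l n _ (fun k => (-t) * b0 k + 0 * b0 k)) by (intros; unfold vsub; ring).
    rewrite (ip_ext_r n _ _ (fun k => (-t) * b0 k + 0 * b0 k)) by (intros; unfold vsub; ring).
    rewrite ip_lin_l, !ip_lin_r. nra.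
Qed.

Lemma finite_min (L : list vec) (Q : vec -> Prop) (f : vec -> R) :
  (forall g, In g L -> Q g -> 0 < f g) ->
  exists m, 0 < m /\ forall g, In g L -> Q g -> m <= f g.
Proof.
  induction L as [|a L IH]; intros H.
  - exists 1. split. lra. intros g [].
  - destruct IH as [m [Hm Hm']]. { intros; apply H; simpl; auto. }
    destruct (classic (Q a)) as [Qa|Qa].
    + assert (0 < f a) by (apply H; simpl; auto).
      exists (Rmin m (f a)). split. apply Rmin_pos; auto.
      intros g [E|Hg] Qg. subst. apply Rmin_r.
      eapply Rle_trans. apply Rmin_l. auto.
    + exists m. split; auto. intros g [E|Hg] Qg. subst; contradiction. auto.
Qed.

Lemma small_perturbation (L : list vec) (Q : vec -> Prop) (a c : vec -> R) :
  (forall g, In g L -> Q g -> a g <> 0) ->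
  exists d, 0 < d /\ forall g, In g L -> Q g ->
    (0 < a g <-> 0 < a g + d * c g) /\ a g + d * c g <> 0.
Proof.
  intros H.
  destruct (finite_min L Q (fun g => Rabs (a g) / (Rabs (c g) + 1))) as [m [Hm Hm']].
  { intros g Hg Qg. apply Rdiv_lt_0_compat. apply Rabs_pos_lt; auto.
    pose proof (Rabs_pos (c g)); lra. }
  exists (m / 2). split. lra. intros g Hg Qg.
  specialize (Hm' g Hg Qg). specialize (H g Hg Qg).
  pose proof (Rabs_pos (c g)).
  assert (Hd : m / 2 * Rabs (c g) < Rabs (a g)).
  { apply Rmult_le_compat_r with (r := Rabs (c g) + 1) in Hm'; [|lra].
    unfold Rdiv in Hm'. rewrite Rmult_assoc, Rinv_l, Rmult_1_r in Hm' by lra.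
    pose proof (Rabs_pos_lt _ H). nra. }
  assert (Hb : Rabs (m / 2 * c g) < Rabs (a g)).
  { rewrite Rabs_mult, (Rabs_right (m/2)) by lra. auto. }
  split; [split|]; intros;
    revert Hb; unfold Rabs; destruct (Rcase_abs (a g)), (Rcase_abs (m / 2 * c g)); lra.
Qed.

Lemma closure_component_same_side n Z L P x y :
  cell n Z L P x -> cell n Z L P y ->
  same_set (closure n (component (cell n Z L P) x))
           (closure n (component (cell n Z L P) y)) ->
  same_side n L P x y.
Proof.
  intros Dx Dy E.
  assert (K : forall u v, cell n Z L P u -> cell n Z L P v ->
     closure n (component (cell n Z L P) v) u ->
     forall g, In g L -> P g -> 0 < ip n u g -> 0 < ip n v g).
  { intros u v Du Dv Cu g Hg Pg Pu.
    destruct (Rlt_dec 0 (ip n v g)) as [|Nv]; auto. exfalso.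
    pose proof (closure_ge n (component (cell n Z L P) v) (fun k => - g k) u) as C.
    rewrite ip_opp_r in C. enough (0 <= - ip n u g) by lra.
    apply C; auto. intros z Cz. rewrite ip_opp_r.
    apply component_cell_iff in Cz. destruct Cz as [_ [[_ [_ Nz]] S]].
    specialize (S g Hg Pg). specialize (Nz g Hg Pg). destruct Dv as [_ [_ Nv']].
    specialize (Nv' g Hg Pg).
    destruct (Rlt_dec 0 (ip n z g)) as [Q|Q]; [apply S in Q|]; lra. }
  assert (Self : forall u, cell n Z L P u -> closure n (component (cell n Z L P) u) u).
  { intros u Du. apply closure_self. apply Du.
    apply component_cell_iff. split; [|split]; auto using same_side_refl. }
  intros g Hg Pg. split; apply K; auto; apply E; apply Self; auto.
Qed.

(** ** The root system D_n *)

Lemma In_PhiD n g :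
  In g (PhiD n) <-> exists i j, (1 <= i)%nat /\ (i < j)%nat /\ (j <= n)%nat /\
                               (g = root_minus i j \/ g = root_plus i j).
Proof.
  unfold PhiD. rewrite in_flat_map. split.
  - intros [j [Hj Hg]]. rewrite in_seq in Hj. rewrite in_flat_map in Hg.
    destruct Hg as [i [Hi Hg]]. rewrite in_seq in Hi. exists i, j.
    repeat split; try lia. simpl in Hg. intuition.
  - intros [i [j [H1 [H2 [H3 H4]]]]]. exists j. rewrite in_seq. split. lia.
    rewrite in_flat_map. exists i. rewrite in_seq. split. lia. simpl. intuition.
Qed.

Ltac eqbs := repeat match goal with
  | |- context [Nat.eqb ?a ?b] => destruct (Nat.eqb_spec a b) end.
Ltac eqbsH := repeat match goal with
  | H : context [Nat.eqb ?a ?b] |- _ => destruct (Nat.eqb_spec a b) end.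
Ltac rootval := unfold root_minus, root_plus, vsub, vadd, eps.

Ltac inphi := apply In_PhiD; first
  [ refine (ex_intro _ _ (ex_intro _ _ (conj _ (conj _ (conj _ (or_introl eq_refl)))))); lia
  | refine (ex_intro _ _ (ex_intro _ _ (conj _ (conj _ (conj _ (or_intror eq_refl)))))); lia ].

Lemma PhiD_V n g : In g (PhiD n) -> in_V n g.
Proof.
  rewrite In_PhiD. intros [i [j [? [? [? [E|E]]]]]] k Hk; subst;
    rootval; eqbs; try lia; lra.
Qed.

Definition generic_point (n : nat) : vec :=
  fun k => if andb (Nat.leb 1 k) (Nat.leb k n) then INR k else 0.

Lemma generic_point_V n : in_V n (generic_point n).
Proof.
  intros k Hk. unfold generic_point.
  destruct (Nat.leb_spec 1 k); destruct (Nat.leb_spec k n); simpl; auto; lia.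
Qed.

Lemma generic_point_val n k : (1 <= k <= n)%nat -> generic_point n k = INR k.
Proof.
  intros. unfold generic_point.
  destruct (Nat.leb_spec 1 k); destruct (Nat.leb_spec k n); simpl; auto; lia.
Qed.

Lemma generic_point_pos n g : In g (PhiD n) -> 0 < ip n (generic_point n) g.
Proof.
  rewrite In_PhiD. intros [i [j [? [? [? [E|E]]]]]]; subst;
    [rewrite ip_minus by lia | rewrite ip_plus by lia];
    rewrite !generic_point_val by lia.
  - apply Rlt_0_minus. apply lt_INR; lia.
  - pose proof (lt_0_INR i ltac:(lia)). pose proof (lt_0_INR j ltac:(lia)). lra.
Qed.

Lemma ip_root_self n u : In u (PhiD n) -> ip n u u = 2.
Proof.
  rewrite In_PhiD. intros [i [j [? [? [? [E|E]]]]]]; subst;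
    first [rewrite ip_minus by lia | rewrite ip_plus by lia]; rootval; eqbs; try lia; lra.
Qed.

Lemma ip_root_cases n u v : In u (PhiD n) -> In v (PhiD n) -> u <> v ->
  ip n u v = -1 \/ ip n u v = 0 \/ ip n u v = 1.
Proof.
  rewrite !In_PhiD.
  intros [i [j [? [? [? [E|E]]]]]] [k [l [? [? [? [F|F]]]]]] N; subst;
    first [rewrite ip_minus by lia | rewrite ip_plus by lia]; rootval; eqbs; subst;
    try (exfalso; apply N; reflexivity); try lia; lra.
Qed.

Definition is_sum n (u v w : vec) : Prop := forall x, ip n x u = ip n x v + ip n x w.

Ltac ipr := repeat first [rewrite ip_minus by lia | rewrite ip_plus by lia].

Ltac sum_witness_with d :=
  exists d; split; [inphi|];
  first [ left; intros x; ipr; ring | right; intros x; ipr; ring ].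
Ltac sum_witness a b :=
  first [ sum_witness_with (root_minus a b) | sum_witness_with (root_plus a b) ].

Lemma root_difference n u v : In u (PhiD n) -> In v (PhiD n) -> ip n u v = 1 ->
  exists d, In d (PhiD n) /\ (is_sum n u v d \/ is_sum n v u d).
Proof.
  unfold is_sum. intros Hu Hv. rewrite !In_PhiD in Hu, Hv.
  destruct Hu as [i [j [? [? [? [E|E]]]]]]; destruct Hv as [k [l [? [? [? [F|F]]]]]]; subst;
  intros Hc; rewrite ?ip_minus, ?ip_plus in Hc by lia;
  unfold root_minus, root_plus, vsub, vadd, eps in Hc;
  eqbsH; subst; try lra; try lia;
  try destruct (Nat.lt_ge_cases i k); try destruct (Nat.lt_ge_cases j l);
  try destruct (Nat.lt_ge_cases i l); try destruct (Nat.lt_ge_cases j k); try lia;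
  match goal with a : nat, b : nat |- _ => sum_witness a b end.
Qed.

(** ** Rank-two subarrangements and the region B' *)

Lemma A2_complement_cell n Phi b1 b2 :
  same_set (A2_complement n Phi b1 b2) (cell n nil Phi (in_A2 n Phi b1 b2)).
Proof.
  intros x. unfold A2_complement, cell, Hyp. split.
  - intros [V H]. repeat split; auto. intros z []. intros g Hg Pg E. apply (H g Pg); auto.
  - intros [V [_ H]]. split; auto. intros g Pg [_ E]. apply (H g (proj1 Pg) Pg E).
Qed.

Lemma Bprime_iff n b1 b2 y : Bprime n (PhiD n) b1 b2 y <->
  (in_V n y /\ forall g, In g (PhiD n) -> in_A2 n (PhiD n) b1 b2 g -> 0 < ip n y g).
Proof.
  unfold Bprime.
  pose proof (generic_point_V n) as V0. pose proof (generic_point_pos n) as P0.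
  split.
  - intros [b [[Vb Pb] C]].
    apply (component_ext _ _ _ _ (A2_complement_cell n (PhiD n) b1 b2)) in C.
    apply component_cell_iff in C. destruct C as [_ [Dy S]]. split. apply Dy.
    intros g Hg Ag. apply (S g Hg Ag). apply Pb; auto.
  - intros [Vy Py]. exists (generic_point n).
    split. { split; auto. }
    apply (component_ext _ _ _ _ (A2_complement_cell n (PhiD n) b1 b2)), component_cell_iff.
    split; [|split].
    + split; auto. split. intros z []. intros g Hg _. pose proof (P0 g Hg); lra.
    + split; auto. split. intros z []. intros g Hg Ag. pose proof (Py g Hg Ag); lra.
    + intros g Hg Ag. split; intros; auto.
Qed.

Lemma closure_Bprime_iff n b1 b2 y : closure n (Bprime n (PhiD n) b1 b2) y <->
  (in_V n y /\ forall g, In g (PhiD n) -> in_A2 n (PhiD n) b1 b2 g -> 0 <= ip n y g).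
Proof.
  split.
  - intros C. split. apply C. intros g Hg Ag.
    apply (closure_ge n (Bprime n (PhiD n) b1 b2) g y); auto.
    intros z Bz. apply Bprime_iff in Bz. left. apply Bz; auto.
  - intros [Vy Py].
    apply (closure_cone n _ (PhiD n) (in_A2 n (PhiD n) b1 b2) (generic_point n)); auto.
    + intros z Vz Pz. apply Bprime_iff; auto.
    + apply generic_point_V.
    + intros; apply generic_point_pos; auto.
Qed.

Definition in_span n (g u v : vec) : Prop :=
  exists l m, forall x, ip n x g = l * ip n x u + m * ip n x v.

Lemma ip_comb3_l n (g u v y : vec) l m :
  ip n (fun k => g k - l * u k - m * v k) y = ip n g y - l * ip n u y - m * ip n v y.
Proof. induction n; simpl. ring. rewrite IHn; ring. Qed.

Lemma ip_comb3_r n (g u v y : vec) l m :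
  ip n y (fun k => g k - l * u k - m * v k) = ip n y g - l * ip n y u - m * ip n y v.
Proof. rewrite ip_sym, ip_comb3_l, !(ip_sym n y). auto. Qed.

(** A vector orthogonal to everything orthogonal to two distinct roots lies in
    their span: subtract its orthogonal projection onto the plane. *)
Lemma vanish_in_span n u v g : In u (PhiD n) -> In v (PhiD n) -> u <> v -> in_V n g ->
  (forall x, Hyp n u x -> Hyp n v x -> Hyp n g x) -> in_span n g u v.
Proof.
  intros Hu Hv N Vg H.
  set (c := ip n u v). assert (Hc : c = -1 \/ c = 0 \/ c = 1) by (apply ip_root_cases; auto).
  set (c1 := ip n g u). set (c2 := ip n g v).
  assert (D : 4 - c * c > 0) by (destruct Hc as [E|[E|E]]; rewrite E; lra).
  set (l := (2 * c1 - c * c2) / (4 - c * c)). set (m := (2 * c2 - c * c1) / (4 - c * c)).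
  set (r := fun k => g k - l * u k - m * v k).
  assert (Vr : in_V n r).
  { intros k Hk; unfold r; rewrite Vg, (PhiD_V n u), (PhiD_V n v); auto; ring. }
  assert (E1 : ip n r u = 0).
  { unfold r. rewrite ip_comb3_l, (ip_root_self n u Hu), (ip_sym n v u). fold c c1.
    unfold l, m. field. lra. }
  assert (E2 : ip n r v = 0).
  { unfold r. rewrite ip_comb3_l, (ip_root_self n v Hv). fold c c2.
    unfold l, m. field. lra. }
  assert (E3 : ip n r g = 0) by (apply H; split; auto).
  assert (E4 : ip n r r = 0).
  { unfold r at 2. rewrite ip_comb3_r. fold r. rewrite E1, E2, E3; ring. }
  exists l, m. intros x.
  assert (Z : ip n x r = 0).
  { rewrite (ip_ext_r n x r (fun _ => 0)) by (apply ip_self_zero; auto). apply ip_zero_r. }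
  unfold r in Z. rewrite ip_comb3_r in Z. lra.
Qed.

Lemma in_span_vanish n u v g :
  in_span n g u v -> forall x, Hyp n u x -> Hyp n v x -> Hyp n g x.
Proof. intros [l [m E]] x [Vx Hu] [_ Hv]. split; auto. rewrite E, Hu, Hv; ring. Qed.

Lemma in_A2_iff_span n b1 b2 g : In b1 (PhiD n) -> In b2 (PhiD n) -> b1 <> b2 ->
  (in_A2 n (PhiD n) b1 b2 g <-> In g (PhiD n) /\ in_span n g b1 b2).
Proof.
  intros H1 H2 N. unfold in_A2. split.
  - intros [Hg H]. split; auto. apply vanish_in_span; auto. apply PhiD_V; auto.
  - intros [Hg S]. split; auto. apply in_span_vanish; auto.
Qed.

Lemma ip_in_span n u v w w' l m l' m' : In u (PhiD n) -> In v (PhiD n) ->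
  (forall x, ip n x w = l * ip n x u + m * ip n x v) ->
  (forall x, ip n x w' = l' * ip n x u + m' * ip n x v) ->
  ip n w w' = l * (2 * l' + ip n u v * m') + m * (ip n u v * l' + 2 * m').
Proof.
  intros Hu Hv Ew Ew'.
  rewrite (ip_sym n w w'), Ew, (ip_sym n w' u), (ip_sym n w' v), !Ew',
    (ip_root_self n u Hu), (ip_root_self n v Hv), (ip_sym n v u). ring.
Qed.

(** Two distinct roots of the plane spanned by two distinct roots span the
    same plane, since the Gram determinant of distinct roots does not vanish. *)
Lemma span_exchange n u v b g : In u (PhiD n) -> In v (PhiD n) -> u <> v ->
  In b (PhiD n) -> In g (PhiD n) -> b <> g ->
  in_span n b u v -> in_span n g u v ->
  forall x, ip n x b = 0 -> ip n x g = 0 -> ip n x u = 0 /\ ip n x v = 0.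
Proof.
  intros Hu Hv N Hb Hg Nbg [l1 [m1 Eb]] [l2 [m2 Eg]] x Xb Xg.
  assert (Hc' := ip_root_cases n b g Hb Hg Nbg).
  set (d := l1 * m2 - l2 * m1).
  assert (Gram : ip n b b * ip n g g - ip n b g * ip n b g = d * d * (4 - ip n u v * ip n u v)).
  { rewrite (ip_in_span n u v b b l1 m1 l1 m1), (ip_in_span n u v g g l2 m2 l2 m2),
      (ip_in_span n u v b g l1 m1 l2 m2) by auto. unfold d. ring. }
  rewrite (ip_root_self n b Hb), (ip_root_self n g Hg) in Gram.
  assert (Hd : d <> 0).
  { intros E. rewrite E in Gram. destruct Hc' as [F|[F|F]]; rewrite F in Gram; lra. }
  rewrite Eb in Xb. rewrite Eg in Xg.
  split; apply Rmult_eq_reg_l with d; auto; unfold d.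
  - replace ((l1 * m2 - l2 * m1) * ip n x u)
      with (m2 * (l1 * ip n x u + m1 * ip n x v) - m1 * (l2 * ip n x u + m2 * ip n x v)) by ring.
    rewrite Xb, Xg; ring.
  - replace ((l1 * m2 - l2 * m1) * ip n x v)
      with (l1 * (l2 * ip n x u + m2 * ip n x v) - l2 * (l1 * ip n x u + m1 * ip n x v)) by ring.
    rewrite Xb, Xg; ring.
Qed.

Lemma A2_transfer n b1 b2 b g : In b1 (PhiD n) -> In b2 (PhiD n) -> b1 <> b2 ->
  in_A2 n (PhiD n) b1 b2 b -> in_A2 n (PhiD n) b1 b2 g -> b <> g ->
  forall h, in_A2 n (PhiD n) b1 b2 h <-> in_A2 n (PhiD n) b g h.
Proof.
  intros H1 H2 N Ab Ag Nbg.
  apply (in_A2_iff_span n b1 b2 b H1 H2 N) in Ab. destruct Ab as [Hb Sb].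
  apply (in_A2_iff_span n b1 b2 g H1 H2 N) in Ag. destruct Ag as [Hg Sg].
  intros h. unfold in_A2. split; intros [Hh V]; split; auto; intros x X1 X2.
  - destruct (span_exchange n b1 b2 b g H1 H2 N Hb Hg Nbg Sb Sg x (proj2 X1) (proj2 X2)).
    apply V; split; auto; apply (proj1 X1).
  - apply V; [apply (in_span_vanish n b1 b2 b Sb) | apply (in_span_vanish n b1 b2 g Sg)]; auto.
Qed.

(** ** Basic hyperplanes and cutting *)

Definition basic_witness n b1 b2 g : Prop :=
  exists p, in_V n p /\ ip n p g = 0 /\
    forall h, In h (PhiD n) -> in_A2 n (PhiD n) b1 b2 h -> h <> g -> 0 < ip n p h.

(** Twice the component of [h] orthogonal to the root [g] (of norm 2). *)
Definition orth_part n (h g : vec) : vec := fun k => 2 * h k + (- ip n h g) * g k.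

Lemma orth_part_facts n h g : In h (PhiD n) -> In g (PhiD n) -> h <> g ->
  in_V n (orth_part n h g) /\ ip n (orth_part n h g) g = 0 /\
  0 < ip n (orth_part n h g) h.
Proof.
  intros Hh Hg N. unfold orth_part.
  assert (Hc := ip_root_cases n h g Hh Hg N).
  split; [|split].
  - intros k Hk. rewrite (PhiD_V n h), (PhiD_V n g); auto; ring.
  - rewrite ip_lin_l, (ip_root_self n g Hg). ring.
  - rewrite ip_lin_l, (ip_root_self n h Hh), (ip_sym n g h).
    destruct Hc as [c|[c|c]]; rewrite c; lra.
Qed.

(** If H_g carries a facet of the closure of B', the centre of the facet is a
    witness: otherwise moving inside H_g against another root h would leave
    the closure. *)
Lemma basic_has_witness n b1 b2 g : In g (PhiD n) ->
  basic n (PhiD n) b1 b2 g -> basic_witness n b1 b2 g.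
Proof.
  intros Hg [A [p [[Vp Hp] [e [He F]]]]]. exists p. split; auto. split; auto.
  intros h Hh Ah Nh. destruct (Rlt_dec 0 (ip n p h)) as [|Np]; auto. exfalso.
  set (w := orth_part n h g).
  destruct (orth_part_facts n h g Hh Hg Nh) as [Vw [wg wh]]. fold w in Vw, wg, wh.
  destruct (ip_small_shift n w e He) as [s [Hs Ds]].
  set (q := fun k => 1 * p k + (- s) * w k).
  assert (Hq : Hyp n g q).
  { split. intros k Hk. unfold q. rewrite Vp, Vw; auto; ring.
    unfold q. rewrite ip_lin_l, wg, Hp; ring. }
  assert (Dq : ip n (vsub p q) (vsub p q) < e * e).
  { rewrite (ip_ext_l n _ (fun k => s * w k + 0 * w k)) by (intros; unfold vsub, q; ring).
    rewrite (ip_ext_r n _ _ (fun k => s * w k + 0 * w k)) by (intros; unfold vsub, q; ring).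
    rewrite ip_lin_l, !ip_lin_r. nra. }
  specialize (F q Hq Dq). apply closure_Bprime_iff in F. destruct F as [_ F].
  specialize (F h Hh Ah). unfold q in F. rewrite ip_lin_l in F. nra.
Qed.

(** Conversely a witness has a whole neighbourhood in H_g inside the closure
    of B' (distinct roots stay positive nearby, by Cauchy-Schwarz). *)
Lemma witness_basic n b1 b2 g :
  in_A2 n (PhiD n) b1 b2 g -> basic_witness n b1 b2 g -> basic n (PhiD n) b1 b2 g.
Proof.
  intros A [p [Vp [Hp Pp]]]. split; auto. exists p. split. split; auto.
  destruct (finite_min (PhiD n) (fun h => in_A2 n (PhiD n) b1 b2 h /\ h <> g)
                       (fun h => ip n p h)) as [m [Hm Hm']].
  { intros h Hh [Ah Nh]; apply Pp; auto. }
  exists (m / 2). split. lra. intros q [Vq Hq] Dq. apply closure_Bprime_iff. split; auto.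
  intros h Hh Ah. destruct (classic (h = g)) as [E|Nh]. { subst. lra. }
  specialize (Hm' h Hh (conj Ah Nh)).
  pose proof (cauchy_schwarz n (vsub p q) h) as C.
  rewrite (ip_root_self n h Hh), ip_vsub_l in C.
  pose proof (ip_nonneg n (vsub p q)).
  assert (Hd : (ip n p h - ip n q h) * (ip n p h - ip n q h) < m * m) by nra.
  destruct (Rle_dec 0 (ip n q h)); auto. nra.
Qed.

Lemma basic_iff n b1 b2 g : In g (PhiD n) ->
  (basic n (PhiD n) b1 b2 g <-> in_A2 n (PhiD n) b1 b2 g /\ basic_witness n b1 b2 g).
Proof.
  intros Hg. split.
  - intros B. split. apply B. apply basic_has_witness; auto.
  - intros [A W]. apply witness_basic; auto.
Qed.

Lemma basic_transfer n b1 b2 b g h : In b1 (PhiD n) -> In b2 (PhiD n) -> b1 <> b2 ->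
  in_A2 n (PhiD n) b1 b2 b -> in_A2 n (PhiD n) b1 b2 g -> b <> g -> In h (PhiD n) ->
  (basic n (PhiD n) b1 b2 h <-> basic n (PhiD n) b g h).
Proof.
  intros H1 H2 N Ab Ag Nbg Hh. pose proof (A2_transfer n b1 b2 b g H1 H2 N Ab Ag Nbg) as T.
  rewrite !basic_iff by auto. unfold basic_witness.
  split; intros [A [p [V [Z P]]]]; (split; [apply T; auto|]);
    exists p; repeat split; auto; intros k Hk Ak Nk; apply P; auto; apply T; auto.
Qed.

Lemma plane_roots n u v g : In u (PhiD n) -> In v (PhiD n) -> u <> v -> In g (PhiD n) ->
  g <> u -> g <> v -> in_span n g u v ->
  (ip n u v = -1 /\ is_sum n g u v) \/
  (ip n u v = 1 /\ (is_sum n u g v \/ is_sum n v g u)).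
Proof.
  intros Hu Hv N Hg Nu Nv [l [m E]].
  assert (Hc := ip_root_cases n u v Hu Hv N).
  assert (H1 := ip_root_cases n u g Hu Hg (not_eq_sym Nu)).
  assert (H2 := ip_root_cases n v g Hv Hg (not_eq_sym Nv)).
  assert (E1 : ip n u g = 2 * l + m * ip n u v) by (rewrite E, (ip_root_self n u Hu); ring).
  assert (E2 : ip n v g = l * ip n u v + 2 * m)
    by (rewrite E, (ip_root_self n v Hv), (ip_sym n v u); ring).
  assert (E3 : 2 = l * ip n u g + m * ip n v g)
    by (rewrite <- (ip_root_self n g Hg), E, (ip_sym n g u), (ip_sym n g v); ring).
  assert (P : 0 < l * ip n (generic_point n) u + m * ip n (generic_point n) v)
    by (rewrite <- E; apply generic_point_pos; auto).
  pose proof (generic_point_pos n u Hu). pose proof (generic_point_pos n v Hv).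
  destruct Hc as [C|[C|C]]; rewrite C in *; destruct H1 as [F1|[F1|F1]]; rewrite F1 in *;
    destruct H2 as [F2|[F2|F2]]; rewrite F2 in *; try (exfalso; lra).
  all: first [ assert (l = 1) by lra | assert (l = -1) by lra | assert (l = 0) by lra ];
       first [ assert (m = 1) by lra | assert (m = -1) by lra | assert (m = 0) by lra ]; subst;
       try (exfalso; lra).
  all: unfold is_sum; try (left; split; auto; intros x; rewrite E; ring).
  all: right; split; auto;
       first [left; intros x; rewrite E; ring | right; intros x; rewrite E; ring].
Qed.

Lemma in_A2_comb n u v h : In u (PhiD n) -> In v (PhiD n) -> u <> v -> In h (PhiD n) ->
  forall l m, (forall x, ip n x h = l * ip n x u + m * ip n x v) -> in_A2 n (PhiD n) u v h.
Proof. intros Hu Hv N Hh l m E. apply in_A2_iff_span; auto. split; auto. exists l, m; auto. Qed.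

(** If u.v <= 0, then H_u is basic in A(H_u,H_v): the point v - (u.v/2) u of
    H_u is positive on v and on u + v. *)
Lemma basic_if_nonacute n u v : In u (PhiD n) -> In v (PhiD n) -> u <> v ->
  (ip n u v = 0 \/ ip n u v = -1) -> basic n (PhiD n) u v u.
Proof.
  intros Hu Hv N Hc. apply basic_iff; auto. split.
  { apply (in_A2_comb n u v u Hu Hv N Hu 1 0). intros; ring. }
  set (c := ip n u v) in *.
  exists (fun k => 1 * v k + (- (c / 2)) * u k). split; [|split].
  - intros k Hk. rewrite (PhiD_V n u), (PhiD_V n v); auto; ring.
  - rewrite ip_lin_l, (ip_root_self n u Hu), (ip_sym n v u). fold c. field.
  - intros h Hh Ah Nh. rewrite ip_lin_l.
    destruct (classic (h = v)) as [E|E].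
    + rewrite E, (ip_root_self n v Hv). fold c. destruct Hc as [F|F]; rewrite F; lra.
    + apply in_A2_iff_span in Ah; auto. destruct Ah as [_ S].
      destruct (plane_roots n u v h Hu Hv N Hh Nh E S) as [[C F]|[C F]]; fold c in C.
      * rewrite !F, (ip_root_self n u Hu), (ip_root_self n v Hv), (ip_sym n v u).
        fold c. rewrite C. lra.
      * exfalso. destruct Hc as [F'|F']; lra.
Qed.

(** A root which is the sum of two other roots of the subarrangement is not
    basic: a witness would be positive on both summands but zero on the sum. *)
Lemma sum_not_basic n b1 b2 h g d : In h (PhiD n) -> basic n (PhiD n) b1 b2 h ->
  is_sum n h g d -> in_A2 n (PhiD n) b1 b2 g -> in_A2 n (PhiD n) b1 b2 d ->
  g <> h -> d <> h -> False.
Proof.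
  intros Hh B F Ag Ad Ng Nd. apply basic_iff in B; auto. destruct B as [_ [p [V [Z P]]]].
  pose proof (P g (proj1 Ag) Ag Ng). pose proof (P d (proj1 Ad) Ad Nd). rewrite F in Z. lra.
Qed.

Lemma is_sum_neq n h g d : In g (PhiD n) -> In d (PhiD n) -> is_sum n h g d ->
  g <> h /\ d <> h.
Proof.
  intros Hg Hd F. split; intros E; subst.
  - specialize (F d). rewrite (ip_root_self n d Hd), (ip_sym n d h) in F. lra.
  - specialize (F g). rewrite (ip_root_self n g Hg), (ip_sym n g h) in F. lra.
Qed.

(** Rename the
    subarrangement A(H_b, H_g); since H_b is not basic, b.g = 1 (otherwise H_b
    would be basic), so b - g or g - b is a root, and g = b + (g - b) would
    contradict that H_g is basic. *)
Lemma cut_gives_difference n b g : In b (PhiD n) -> cuts n (PhiD n) g b ->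
  In g (PhiD n) /\ exists d, In d (PhiD n) /\ is_sum n b g d.
Proof.
  intros Hb [b1 [b2 [H1 [H2 [NS [Ab [NBb Bg]]]]]]].
  assert (N12 : b1 <> b2) by (intros E; subst; apply NS; intros x; tauto).
  assert (Ag : in_A2 n (PhiD n) b1 b2 g) by apply Bg.
  assert (Hg : In g (PhiD n)) by apply Ag.
  assert (Nbg : b <> g) by (intros E; subst; contradiction).
  rewrite (basic_transfer n b1 b2 b g b H1 H2 N12 Ab Ag Nbg Hb) in NBb.
  rewrite (basic_transfer n b1 b2 b g g H1 H2 N12 Ab Ag Nbg Hg) in Bg.
  split; auto.
  destruct (ip_root_cases n b g Hb Hg Nbg) as [C|[C|C]];
    try (exfalso; apply NBb, basic_if_nonacute; auto; fail).
  destruct (root_difference n b g Hb Hg C) as [d [Hd [F|F]]]. { exists d; auto. }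
  exfalso. apply (sum_not_basic n b g g b d Hg Bg F).
  - apply (in_A2_comb n b g b Hb Hg Nbg Hb 1 0); intros; ring.
  - apply (in_A2_comb n b g d Hb Hg Nbg Hd (-1) 1); intros x; rewrite (F x); ring.
  - auto.
  - apply (is_sum_neq n g b d Hb Hd F).
Qed.

(** Conversely if b = g + d with g, d positive roots, then in A(H_g, H_d)
    (where g.d = -1) the basic hyperplanes are H_g and H_d, and H_b is not
    basic. *)
Lemma difference_gives_cut n b g d : In b (PhiD n) -> In g (PhiD n) -> In d (PhiD n) ->
  is_sum n b g d -> cuts n (PhiD n) g b.
Proof.
  intros Hb Hg Hd F.
  destruct (is_sum_neq n b g d Hg Hd F) as [Ngb Ndb].
  assert (C : ip n g d = -1).
  { pose proof (ip_root_self n b Hb) as E.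
    rewrite F, (ip_sym n b g), (ip_sym n b d), !F, (ip_root_self n g Hg),
      (ip_root_self n d Hd), (ip_sym n d g) in E. lra. }
  assert (Ngd : g <> d) by (intros E; subst; rewrite (ip_root_self n d Hd) in C; lra).
  exists g, d. split; auto. split; auto. split; [|split; [|split]].
  - intros S. set (p := fun k => 1 * d k + (1/2) * g k).
    assert (Hp : Hyp n g p).
    { split. intros k Hk; unfold p; rewrite (PhiD_V n d), (PhiD_V n g); auto; ring.
      unfold p; rewrite ip_lin_l, (ip_sym n d g), C, (ip_root_self n g Hg); lra. }
    apply S in Hp. destruct Hp as [_ Hp]. unfold p in Hp.
    rewrite ip_lin_l, (ip_root_self n d Hd), C in Hp. lra.
  - apply (in_A2_comb n g d b Hg Hd Ngd Hb 1 1); intros; rewrite F; ring.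
  - intros B. apply (sum_not_basic n g d b g d Hb B F); auto.
    + apply (in_A2_comb n g d g Hg Hd Ngd Hg 1 0); intros; ring.
    + apply (in_A2_comb n g d d Hg Hd Ngd Hd 0 1); intros; ring.
  - apply basic_if_nonacute; auto.
Qed.

Lemma cuts_iff n b g : In b (PhiD n) ->
  (cuts n (PhiD n) g b <-> In g (PhiD n) /\ exists d, In d (PhiD n) /\ is_sum n b g d).
Proof.
  intros Hb. split.
  - apply cut_gives_difference; auto.
  - intros [Hg [d [Hd F]]]. apply (difference_gives_cut n b g d); auto.
Qed.

(** ** Shards as sign classes *)

Definition shard_cell n b : vec -> Prop :=
  cell n (b :: nil) (PhiD n) (fun g => cuts n (PhiD n) g b).

Definition shard_side n b : vec -> vec -> Prop :=
  same_side n (PhiD n) (fun g => cuts n (PhiD n) g b).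

Lemma shard_cell_iff n b x : shard_cell n b x <->
  in_V n x /\ ip n x b = 0 /\
  forall g, In g (PhiD n) -> cuts n (PhiD n) g b -> ip n x g <> 0.
Proof.
  split.
  - intros [V [Z C]]. split; auto. split; auto. apply Z; simpl; auto.
  - intros [V [Z C]]. split; auto. split; auto. intros z [E|[]]; subst; auto.
Qed.

Lemma shard_domain_cell n b : same_set (shard_domain n (PhiD n) b) (shard_cell n b).
Proof.
  intros x. rewrite shard_cell_iff. unfold shard_domain, Hyp. split.
  - intros [[V Z] H]. repeat split; auto. intros g Hg Cg E. apply (H g Hg Cg). split; auto.
  - intros [V [Z H]]. split; auto. intros g Hg Cg [_ E]. apply (H g Hg Cg E).
Qed.

Lemma is_shard_of_iff n b S : is_shard_of n (PhiD n) b S <->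
  exists x, shard_cell n b x /\ same_set S (closure n (component (shard_cell n b) x)).
Proof.
  pose proof (shard_domain_cell n b) as E.
  assert (CE : forall x, same_set (closure n (component (shard_domain n (PhiD n) b) x))
                                  (closure n (component (shard_cell n b) x))).
  { intros x. apply closure_ext. intros z. apply component_ext, E. }
  unfold is_shard_of. split; intros [x [Dx Sx]]; exists x; (split; [apply E; auto|]);
    intros y; rewrite (Sx y), (CE x y); tauto.
Qed.

Lemma count_shards {C : Type} n b (codes : list C) (c0 : C) (rep : C -> vec)
  (sig : vec -> C) :
  NoDup codes ->
  (forall x y, shard_cell n b x -> shard_cell n b y -> (shard_side n b x y <-> sig x = sig y)) ->
  (forall x, shard_cell n b x -> In (sig x) codes) ->
  (forall c, In c codes -> shard_cell n b (rep c)) ->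
  (forall c, In c codes -> sig (rep c) = c) ->
  num_sets (is_shard_of n (PhiD n) b) (length codes).
Proof.
  intros ND Side Codes Cell Sig.
  exists (fun k => closure n (component (shard_cell n b) (rep (nth k codes c0)))).
  split; [|split].
  - intros k Hk. apply is_shard_of_iff. exists (rep (nth k codes c0)).
    split. apply Cell, nth_In; auto. intros y; tauto.
  - intros k l Hk Hl E. apply closure_component_same_side in E; try (apply Cell, nth_In; auto).
    apply Side in E; try (apply Cell, nth_In; auto).
    rewrite !Sig in E by (apply nth_In; auto). eapply NoDup_nth; eauto.
  - intros S HS. apply is_shard_of_iff in HS. destruct HS as [x [Dx E]].
    destruct (In_nth codes (sig x) c0 (Codes x Dx)) as [k [Hk Ek]].
    exists k. split; auto. intros y. rewrite (E y), Ek. revert y. apply closure_ext.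
    assert (Dr : shard_cell n b (rep (sig x))) by (apply Cell; auto).
    apply component_cell_same; auto.
    apply Side; auto. rewrite Sig; auto.
Qed.

Lemma shard_in_hyperplane n b x y :
  closure n (component (shard_cell n b) x) y -> ip n y b = 0.
Proof.
  apply closure_eq_zero. intros z Cz.
  apply component_cell_iff in Cz. apply shard_cell_iff, Cz.
Qed.

(** Shards of distinct hyperplanes are distinct: each shard of H_b contains
    a point off any other hyperplane H_b'. *)
Lemma shards_of_distinct_hyperplanes n b b' S S' : In b (PhiD n) -> In b' (PhiD n) ->
  is_shard_of n (PhiD n) b S -> is_shard_of n (PhiD n) b' S' -> same_set S S' -> b = b'.
Proof.
  intros Hb Hb' P P' E. destruct (classic (b = b')) as [|N]; auto. exfalso.
  apply is_shard_of_iff in P. apply is_shard_of_iff in P'.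
  destruct P as [x [Dx Ex]]. destruct P' as [x' [Dx' Ex']].
  assert (Y : exists y, component (shard_cell n b) x y /\ ip n y b' <> 0).
  { destruct (Req_dec (ip n x b') 0) as [Z|Z].
    - set (w := orth_part n b' b).
      destruct (orth_part_facts n b' b Hb' Hb (not_eq_sym N)) as [Vw [wb wb']].
      fold w in Vw, wb, wb'.
      destruct (proj1 (shard_cell_iff n b x) Dx) as [Vx [Zx Nx]].
      destruct (small_perturbation (PhiD n) (fun g => cuts n (PhiD n) g b)
                  (fun g => ip n x g) (fun g => ip n w g) Nx) as [d [Hd Pd]].
      exists (fun k => 1 * x k + d * w k). split.
      + apply component_cell_iff. split; auto. split.
        * apply shard_cell_iff. split; [|split].
          -- intros k Hk. rewrite Vx, Vw; auto; ring.
          -- rewrite ip_lin_l, Zx, wb; ring.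
          -- intros g Hg Cg. rewrite ip_lin_l, Rmult_1_l. apply (Pd g Hg Cg).
        * intros g Hg Cg. rewrite ip_lin_l, Rmult_1_l. apply (Pd g Hg Cg).
      + rewrite ip_lin_l, Z. nra.
    - exists x. split; auto. apply component_cell_iff.
      split; [|split]; auto using same_side_refl. }
  destruct Y as [y [Cy Ny]]. apply Ny.
  apply (shard_in_hyperplane n b' x'). apply Ex'. apply E. apply Ex.
  apply closure_self; [|exact Cy].
  apply component_cell_iff in Cy. apply (proj1 (proj2 Cy)).
Qed.

Lemma num_sets_ext (P P' : (vec -> Prop) -> Prop) N :
  (forall S, P S <-> P' S) -> num_sets P N -> num_sets P' N.
Proof.
  intros E [f [A [B C]]]. exists f. split; [|split]; auto.
  - intros; apply E; auto.
  - intros S H. apply C, E; auto.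
Qed.

Lemma num_sets_union {I : Type} (l : list I) (Pf : I -> (vec -> Prop) -> Prop) (N : I -> nat) :
  NoDup l -> (forall c, In c l -> num_sets (Pf c) (N c)) ->
  (forall c c' S S', In c l -> In c' l -> Pf c S -> Pf c' S' -> same_set S S' -> c = c') ->
  num_sets (fun S => exists c, In c l /\ Pf c S) (list_sum (map N l)).
Proof.
  induction l as [|a l IH]; intros ND H D.
  - exists (fun _ _ => False). split; [|split]; intros; simpl in *; try lia.
    destruct H0 as [c [[] _]].
  - inversion ND; subst.
    destruct (H a (or_introl eq_refl)) as [fa [A1 [A2 A3]]].
    destruct (IH H3 (fun c Hc => H c (or_intror Hc))
                (fun c c' S S' Hc Hc' => D c c' S S' (or_intror Hc) (or_intror Hc')))
      as [fl [B1 [B2 B3]]].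
    simpl. exists (fun k => if Nat.ltb k (N a) then fa k else fl (k - N a)%nat).
    split; [|split].
    + intros k Hk. destruct (Nat.ltb_spec k (N a)).
      * exists a; split; simpl; auto.
      * destruct (B1 (k - N a)%nat ltac:(lia)) as [c [Hc P]]. exists c; split; simpl; auto.
    + intros k k' Hk Hk' E. destruct (Nat.ltb_spec k (N a)), (Nat.ltb_spec k' (N a)).
      * apply A2; auto.
      * exfalso. destruct (B1 (k' - N a)%nat ltac:(lia)) as [c [Hc P]].
        assert (a = c) by (apply (D a c (fa k) (fl (k' - N a)%nat)); simpl; auto).
        subst; contradiction.
      * exfalso. destruct (B1 (k - N a)%nat ltac:(lia)) as [c [Hc P]].
        assert (c = a) by (apply (D c a (fl (k - N a)%nat) (fa k')); simpl; auto).
        subst; contradiction.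
      * assert (k - N a = k' - N a)%nat by (apply B2; auto; lia). lia.
    + intros S [c [[E|Hc] P]].
      * subst. destruct (A3 S P) as [k [Hk E]]. exists k. split. lia.
        destruct (Nat.ltb_spec k (N c)); auto; lia.
      * destruct (B3 S (ex_intro _ c (conj Hc P))) as [k [Hk E]].
        exists (k + N a)%nat. split. lia.
        destruct (Nat.ltb_spec (k + N a) (N a)). lia.
        replace (k + N a - N a)%nat with k by lia. auto.
Qed.

Definition posb (r : R) : bool := if Rlt_dec 0 r then true else false.

Lemma posb_true r : posb r = true <-> 0 < r.
Proof. unfold posb. destruct (Rlt_dec 0 r); split; intros; auto; easy. Qed.

Lemma posb_false r : posb r = false <-> ~ 0 < r.
Proof. unfold posb. destruct (Rlt_dec 0 r); split; intros; auto; easy. Qed.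

Lemma posb_eq_iff a b : posb a = posb b <-> (0 < a <-> 0 < b).
Proof.
  unfold posb. destruct (Rlt_dec 0 a), (Rlt_dec 0 b); split; intros; try tauto; easy.
Qed.

Lemma pos_opp_iff a b : (0 < a <-> 0 < b) -> a <> 0 -> b <> 0 -> (0 < - a <-> 0 < - b).
Proof.
  intros H A B.
  destruct (Rlt_dec 0 a), (Rlt_dec 0 b); split; intros; try lra; tauto.
Qed.

Lemma map_nth_seq {A : Type} (l : list A) a d :
  map (fun k => nth (k - a) l d) (seq a (length l)) = l.
Proof.
  revert a; induction l; intros a0; simpl; auto. rewrite Nat.sub_diag. f_equal.
  rewrite <- seq_shift, map_map. rewrite <- (IHl a0) at 2. apply map_ext_in. intros k Hk.
  apply in_seq in Hk. replace (S k - a0)%nat with (S (k - a0)) by lia. auto.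
Qed.

Lemma map_cons_NoDup {A : Type} (a : A) l : NoDup l -> NoDup (map (cons a) l).
Proof. intros H. apply FinFun.Injective_map_NoDup; auto. intros x y E; injection E; auto. Qed.

Lemma map_cons_disjoint {A : Type} (a b : A) l l' :
  a <> b -> forall x, In x (map (cons a) l) -> ~ In x (map (cons b) l').
Proof.
  intros N x K1 K2. apply in_map_iff in K1. apply in_map_iff in K2.
  destruct K1 as [u [E1 _]]; destruct K2 as [v [E2 _]]. subst. injection E2; intros; subst; auto.
Qed.

Fixpoint bits (m : nat) : list (list bool) :=
  match m with
  | O => nil :: nil
  | S m => map (cons true) (bits m) ++ map (cons false) (bits m)
  end.

Lemma bits_length m : length (bits m) = (2 ^ m)%nat.
Proof. induction m; simpl; auto. rewrite length_app, !length_map, IHm. lia. Qed.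

Lemma In_bits m l : In l (bits m) <-> length l = m.
Proof.
  revert l; induction m; intros l; simpl.
  - split. intros [E|[]]; subst; auto. intros E; destruct l; simpl in *; auto; lia.
  - rewrite in_app_iff, !in_map_iff. split.
    + intros [[x [E H]]|[x [E H]]]; subst; simpl; f_equal; apply IHm; auto.
    + intros E. destruct l as [|[|] l]; simpl in E; try lia.
      * left; exists l; split; auto; apply IHm; lia.
      * right; exists l; split; auto; apply IHm; lia.
Qed.

Lemma bits_NoDup m : NoDup (bits m).
Proof.
  induction m; simpl. { constructor. intros []. constructor. }
  apply NoDup_app; try apply map_cons_NoDup; auto.
  intros x K1. apply (map_cons_disjoint true false _ _ ltac:(discriminate) x K1).
Qed.

(** Letters describing the position of a real t with respect to s and -s:
    the pair of bits (t > s, t > -s). *)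
Definition FF := (false, false).
Definition FT := (false, true).
Definition TF := (true, false).
Definition TT := (true, true).

Lemma letter_cases (a : bool * bool) : a = FF \/ a = FT \/ a = TF \/ a = TT.
Proof. destruct a as [[|] [|]]; unfold FF, FT, TF, TT; auto. Qed.

Lemma NoDup_cons3 {A : Type} (a b c : A) l1 l2 l3 : a <> b -> a <> c -> b <> c ->
  NoDup l1 -> NoDup l2 -> NoDup l3 ->
  NoDup (map (cons a) l1 ++ map (cons b) l2 ++ map (cons c) l3).
Proof.
  intros Nab Nac Nbc D1 D2 D3.
  apply NoDup_app; [apply map_cons_NoDup; auto | apply NoDup_app; try apply map_cons_NoDup; auto|].
  - intros x K1. apply (map_cons_disjoint b c _ _ Nbc x K1).
  - intros x K1 K2. apply in_app_iff in K2.
    destruct K2;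
      [apply (map_cons_disjoint a b l1 l2 Nab x K1) | apply (map_cons_disjoint a c l1 l3 Nac x K1)];
      auto.
Qed.

Fixpoint words_noTF (m : nat) : list (list (bool * bool)) :=
  match m with
  | O => nil :: nil
  | S m => map (cons FF) (words_noTF m) ++ map (cons FT) (words_noTF m) ++
           map (cons TT) (words_noTF m)
  end.

Fixpoint words_noFT (m : nat) : list (list (bool * bool)) :=
  match m with
  | O => nil :: nil
  | S m => map (cons FF) (words_noFT m) ++ map (cons TF) (words_noFT m) ++
           map (cons TT) (words_noFT m)
  end.

Fixpoint words_TF_noFT (m : nat) : list (list (bool * bool)) :=
  match m with
  | O => nil
  | S m => map (cons FF) (words_TF_noFT m) ++ map (cons TT) (words_TF_noFT m) ++
           map (cons TF) (words_noFT m)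
  end.

Lemma In_words_noTF m w : In w (words_noTF m) <-> length w = m /\ ~ In TF w.
Proof.
  revert w; induction m; intros w; simpl.
  - split. intros [E|[]]; subst; simpl; auto. intros [E _]; destruct w; simpl in *; auto; lia.
  - rewrite !in_app_iff, !in_map_iff. split.
    + intros [[x [E H]]|[[x [E H]]|[x [E H]]]]; subst; simpl; apply IHm in H;
        destruct H as [L N]; split; try (f_equal; auto); intros [F|F]; try discriminate; auto.
    + intros [E N]. destruct w as [|a w]; simpl in E; try lia.
      assert (Hw : In w (words_noTF m))
        by (apply IHm; split; [lia|]; intros F; apply N; simpl; auto).
      destruct (letter_cases a) as [F|[F|[F|F]]]; subst.
      * left; eauto.
      * right; left; eauto.
      * exfalso; apply N; simpl; auto.
      * right; right; eauto.
Qed.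

Lemma In_words_noFT m w : In w (words_noFT m) <-> length w = m /\ ~ In FT w.
Proof.
  revert w; induction m; intros w; simpl.
  - split. intros [E|[]]; subst; simpl; auto. intros [E _]; destruct w; simpl in *; auto; lia.
  - rewrite !in_app_iff, !in_map_iff. split.
    + intros [[x [E H]]|[[x [E H]]|[x [E H]]]]; subst; simpl; apply IHm in H;
        destruct H as [L N]; split; try (f_equal; auto); intros [F|F]; try discriminate; auto.
    + intros [E N]. destruct w as [|a w]; simpl in E; try lia.
      assert (Hw : In w (words_noFT m))
        by (apply IHm; split; [lia|]; intros F; apply N; simpl; auto).
      destruct (letter_cases a) as [F|[F|[F|F]]]; subst.
      * left; eauto.
      * exfalso; apply N; simpl; auto.
      * right; left; eauto.
      * right; right; eauto.
Qed.

Lemma In_words_TF_noFT m w :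
  In w (words_TF_noFT m) <-> length w = m /\ ~ In FT w /\ In TF w.
Proof.
  revert w; induction m; intros w; simpl.
  - split. intros []. intros [E [_ H]]. destruct w; simpl in *; auto; lia.
  - rewrite !in_app_iff, !in_map_iff. split.
    + intros [[x [E H]]|[[x [E H]]|[x [E H]]]]; subst; simpl.
      1,2: apply IHm in H; destruct H as [L [N T]]; split; [f_equal; auto|split; auto];
           intros [F|F]; try discriminate; auto.
      apply In_words_noFT in H; destruct H as [L N]. split; [f_equal; auto|split; auto].
      intros [F|F]; try discriminate; auto.
    + intros [E [N T]]. destruct w as [|a w]; simpl in E; try lia.
      assert (N' : ~ In FT w) by (intros F; apply N; simpl; auto).
      destruct (letter_cases a) as [F|[F|[F|F]]]; subst.
      * left. exists w; split; auto. apply IHm. split; [lia|split]; auto.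
        destruct T as [T|T]; auto; discriminate.
      * exfalso; apply N; simpl; auto.
      * right; right. exists w; split; auto. apply In_words_noFT. split; auto; lia.
      * right; left. exists w; split; auto. apply IHm. split; [lia|split]; auto.
        destruct T as [T|T]; auto; discriminate.
Qed.

Definition admissible_words (m : nat) : list (list (bool * bool)) :=
  words_noTF m ++ words_TF_noFT m.

Lemma In_admissible_words m w :
  In w (admissible_words m) <-> length w = m /\ ~ (In FT w /\ In TF w).
Proof.
  unfold admissible_words. rewrite in_app_iff, In_words_noTF, In_words_TF_noFT. split.
  - intros [[L N]|[L [N T]]]; split; tauto.
  - intros [L N]. destruct (classic (In TF w)); [right|left]; tauto.
Qed.

Lemma admissible_words_NoDup m : NoDup (admissible_words m).
Proof.
  assert (D1 : forall m, NoDup (words_noTF m)).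
  { induction m0; simpl. constructor. intros []. constructor.
    apply NoDup_cons3; auto; discriminate. }
  assert (D2 : forall m, NoDup (words_noFT m)).
  { induction m0; simpl. constructor. intros []. constructor.
    apply NoDup_cons3; auto; discriminate. }
  assert (D3 : forall m, NoDup (words_TF_noFT m)).
  { induction m0; simpl. constructor. apply NoDup_cons3; auto; discriminate. }
  apply NoDup_app; auto. intros w H1 H2.
  apply In_words_noTF in H1. apply In_words_TF_noFT in H2. tauto.
Qed.

Lemma admissible_words_length m : (length (admissible_words m) = 2 * 3 ^ m - 2 ^ m)%nat.
Proof.
  assert (L1 : forall m, length (words_noTF m) = (3 ^ m)%nat).
  { induction m0; simpl; auto. rewrite !length_app, !length_map, IHm0. lia. }
  assert (L2 : forall m, length (words_noFT m) = (3 ^ m)%nat).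
  { induction m0; simpl; auto. rewrite !length_app, !length_map, IHm0. lia. }
  assert (L3 : forall m, (length (words_TF_noFT m) + 2 ^ m = 3 ^ m)%nat).
  { induction m0; simpl; auto. rewrite !length_app, !length_map, L2. lia. }
  unfold admissible_words. rewrite length_app, L1. specialize (L3 m). lia.
Qed.

(** ** The hyperplanes cutting H_{i,j} and H_{i,-j} *)

Lemma cut_properties n b g : In b (PhiD n) -> cuts n (PhiD n) g b ->
  In g (PhiD n) /\ ip n b g = 1 /\ ip n (generic_point n) g < ip n (generic_point n) b.
Proof.
  intros Hb C. apply cuts_iff in C; auto. destruct C as [Hg [d [Hd F]]].
  destruct (is_sum_neq n b g d Hg Hd F) as [Ngb Ndb].
  pose proof (F b) as Fb. rewrite (ip_root_self n b Hb) in Fb.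
  pose proof (ip_root_cases n b g Hb Hg (not_eq_sym Ngb)).
  pose proof (ip_root_cases n b d Hb Hd (not_eq_sym Ndb)).
  split; auto. split. lra.
  rewrite (F (generic_point n)). pose proof (generic_point_pos n d Hd). lra.
Qed.

Ltac iprb := repeat first [ rewrite ip_minus in * by lia | rewrite ip_plus in * by lia
                          | rewrite generic_point_val in * by lia ].

Lemma cut_minus_classify n i j g : (1 <= i)%nat -> (i < j)%nat -> (j <= n)%nat ->
  cuts n (PhiD n) g (root_minus i j) ->
  exists k, (i < k)%nat /\ (k < j)%nat /\ (g = root_minus k j \/ g = root_minus i k).
Proof.
  intros H1 H2 H3 C.
  assert (Hb : In (root_minus i j) (PhiD n)) by inphi.
  destruct (cut_properties n _ g Hb C) as [Hg [E P]]. apply In_PhiD in Hg.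
  destruct Hg as [k [l [? [? [? [F|F]]]]]]; subst; iprb;
    unfold root_minus, root_plus, vsub, vadd, eps in E; eqbsH; subst;
    try lra; try lia.
  - exists k. assert (Q : (i < k)%nat) by (apply INR_lt; lra). eauto.
  - exists l. assert (Q : (l < j)%nat) by (apply INR_lt; lra). split; [lia|eauto].
  - exfalso. pose proof (pos_INR i). pose proof (pos_INR k). lra.
  - exfalso. pose proof (pos_INR i). pose proof (pos_INR l). lra.
Qed.

Ltac mkcut d := apply cuts_iff; [inphi|]; split; [inphi|]; exists d; split; [inphi|];
  intros x; iprb; ring.

Lemma cut_minus_examples n i j k : (1 <= i)%nat -> (i < k)%nat -> (k < j)%nat -> (j <= n)%nat ->
  cuts n (PhiD n) (root_minus k j) (root_minus i j) /\
  cuts n (PhiD n) (root_minus i k) (root_minus i j).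
Proof. intros. split. mkcut (root_minus i k). mkcut (root_minus k j). Qed.

Ltac tcon := first [ lia | (apply INR_lt; lra) | (intro; subst; lra) ].
Ltac solve_plus :=
  match goal with v : nat |- exists _, _ => exists v; split; [lia|];
    first [ left; split; [tcon|split; [tcon|reflexivity]]
          | right; left; split; [tcon|reflexivity]
          | right; right; left; split; [tcon|reflexivity]
          | right; right; right; left; split; [tcon|reflexivity]
          | right; right; right; right; split; [split; tcon|reflexivity] ]
  end.

Lemma cut_plus_classify n i j g : (1 <= i)%nat -> (i < j)%nat -> (j <= n)%nat ->
  cuts n (PhiD n) g (root_plus i j) ->
  exists k, (1 <= k)%nat /\
   ((k < j /\ k <> i /\ g = root_minus k j) \/ (k < i /\ g = root_minus k i) \/
    (k < i /\ g = root_plus k j) \/ (k < i /\ g = root_plus k i) \/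
    (i < k < j /\ g = root_plus i k))%nat.
Proof.
  intros H1 H2 H3 C.
  assert (Hb : In (root_plus i j) (PhiD n)) by inphi.
  destruct (cut_properties n _ g Hb C) as [Hg [E P]]. apply In_PhiD in Hg.
  destruct Hg as [k [l [? [? [? [F|F]]]]]]; subst; iprb;
    unfold root_minus, root_plus, vsub, vadd, eps in E; eqbsH; subst;
    try lra; try lia.
  all: try solve_plus.
  exfalso. pose proof (lt_INR i j ltac:(lia)). pose proof (lt_INR j l ltac:(lia)). lra.
Qed.

Lemma cut_plus_examples n i j k : (1 <= i)%nat -> (i < j)%nat -> (j <= n)%nat -> (1 <= k)%nat ->
  ((k < j /\ k <> i)%nat -> cuts n (PhiD n) (root_minus k j) (root_plus i j)) /\
  ((k < i)%nat -> cuts n (PhiD n) (root_minus k i) (root_plus i j)) /\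
  ((k < i)%nat -> cuts n (PhiD n) (root_plus k j) (root_plus i j)) /\
  ((k < i)%nat -> cuts n (PhiD n) (root_plus k i) (root_plus i j)) /\
  ((i < k < j)%nat -> cuts n (PhiD n) (root_plus i k) (root_plus i j)).
Proof.
  intros. split; [|split; [|split; [|split]]]; intros.
  - destruct (Nat.lt_ge_cases k i). mkcut (root_plus k i). mkcut (root_plus i k).
  - mkcut (root_plus k j).
  - mkcut (root_minus k i).
  - mkcut (root_minus k j).
  - mkcut (root_minus k j).
Qed.

(** ** The shards of H_{i,j} *)

Section MinusShards.

Variables n i j : nat.
Hypothesis Hi : (1 <= i)%nat.
Hypothesis Hij : (i < j)%nat.
Hypothesis Hjn : (j <= n)%nat.

Definition minus_code (x : vec) : list bool :=
  map (fun k => posb (x k - x i)) (seq (S i) (j - i - 1)).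

Definition minus_rep (s : list bool) : vec :=
  fun k => if andb (Nat.ltb i k) (Nat.ltb k j)
           then (if nth (k - S i) s false then 1 else -1) else 0.

Lemma minus_rep_mid s k : (i < k < j)%nat ->
  minus_rep s k = if nth (k - S i) s false then 1 else -1.
Proof.
  intros. unfold minus_rep. destruct (Nat.ltb_spec i k), (Nat.ltb_spec k j); simpl; auto; lia.
Qed.

Lemma minus_rep_out s k : ~ (i < k < j)%nat -> minus_rep s k = 0.
Proof.
  intros. unfold minus_rep. destruct (Nat.ltb_spec i k), (Nat.ltb_spec k j); simpl; auto; lia.
Qed.

Lemma minus_cell_facts x : shard_cell n (root_minus i j) x ->
  x j = x i /\ forall k, (i < k < j)%nat -> x k - x i <> 0.
Proof.
  intros Dx. apply shard_cell_iff in Dx. destruct Dx as [_ [Z C]].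
  rewrite ip_minus in Z by lia. split. lra.
  intros k Hk. destruct (cut_minus_examples n i j k Hi (proj1 Hk) (proj2 Hk) Hjn) as [_ Ck].
  assert (Hg : In (root_minus i k) (PhiD n)) by inphi.
  specialize (C _ Hg Ck). rewrite ip_minus in C by lia. auto.
Qed.

Lemma minus_side_iff x y :
  shard_cell n (root_minus i j) x -> shard_cell n (root_minus i j) y ->
  (shard_side n (root_minus i j) x y <->
   forall k, (i < k < j)%nat -> (0 < x k - x i <-> 0 < y k - y i)).
Proof.
  intros Dx Dy. destruct (minus_cell_facts x Dx) as [Xj Xk].
  destruct (minus_cell_facts y Dy) as [Yj Yk]. split.
  - intros S k Hk. destruct (cut_minus_examples n i j k Hi (proj1 Hk) (proj2 Hk) Hjn) as [_ Ck].
    assert (Hg : In (root_minus i k) (PhiD n)) by inphi.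
    specialize (S _ Hg Ck). rewrite !ip_minus in S by lia. auto.
  - intros S g _ Cg. destruct (cut_minus_classify n i j g Hi Hij Hjn Cg) as [k [Hk1 [Hk2 [E|E]]]];
      subst g; rewrite !ip_minus by lia.
    + rewrite Xj, Yj. replace (x i - x k) with (- (x k - x i)) by ring.
      replace (y i - y k) with (- (y k - y i)) by ring.
      apply pos_opp_iff; auto.
    + apply S; lia.
Qed.

Lemma minus_side_code x y :
  shard_cell n (root_minus i j) x -> shard_cell n (root_minus i j) y ->
  (shard_side n (root_minus i j) x y <-> minus_code x = minus_code y).
Proof.
  intros Dx Dy. rewrite minus_side_iff by auto. unfold minus_code. rewrite map_ext_in_iff.
  split; intros H k Hk.
  - apply in_seq in Hk. apply posb_eq_iff, H. lia.
  - apply posb_eq_iff, H, in_seq. lia.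
Qed.

Lemma minus_rep_cell s : shard_cell n (root_minus i j) (minus_rep s).
Proof.
  apply shard_cell_iff. split; [|split].
  - intros k Hk. apply minus_rep_out. lia.
  - rewrite ip_minus, !minus_rep_out by lia. ring.
  - intros g Hg Cg. destruct (cut_minus_classify n i j g Hi Hij Hjn Cg) as [k [Hk1 [Hk2 [E|E]]]];
      subst g; rewrite !ip_minus by lia;
      rewrite ?(minus_rep_out s j), ?(minus_rep_out s i), ?minus_rep_mid by lia;
      destruct (nth _ s false); lra.
Qed.

Lemma minus_code_rep s : In s (bits (j - i - 1)) -> minus_code (minus_rep s) = s.
Proof.
  intros Hs. apply In_bits in Hs. unfold minus_code.
  rewrite (minus_rep_out s i) by lia.
  transitivity (map (fun k => nth (k - S i) s false) (seq (S i) (length s)));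
    [|apply map_nth_seq].
  rewrite Hs. apply map_ext_in. intros k Hk. apply in_seq in Hk. rewrite minus_rep_mid by lia.
  destruct (nth (k - S i) s false); [apply posb_true | apply posb_false]; lra.
Qed.

Lemma shards_minus :
  num_sets (is_shard_of n (PhiD n) (root_minus i j)) (2 ^ (j - i - 1))%nat.
Proof.
  rewrite <- bits_length.
  apply (count_shards n _ (bits (j - i - 1)) nil minus_rep minus_code).
  - apply bits_NoDup.
  - apply minus_side_code.
  - intros x _. apply In_bits. unfold minus_code. rewrite length_map, length_seq. auto.
  - intros s _. apply minus_rep_cell.
  - apply minus_code_rep.
Qed.

End MinusShards.

(** ** The shards of H_{i,-j} *)

(** The sign of x_j forced by a word: negative iff the word contains TF,
    i.e. some x_k lies strictly between x_j and -x_j with x_j < 0. *)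
Definition word_sign (w : list (bool * bool)) : R :=
  if existsb (fun a => andb (fst a) (negb (snd a))) w then -1 else 1.

(** A value of x_k realising a letter when x_j = t = +-1. *)
Definition letter_value (a : bool * bool) : R :=
  if fst a then (if snd a then 2 else 0) else (if snd a then 0 else -2).

Definition letter_fits (a : bool * bool) (t : R) : Prop :=
  (t = 1 \/ t = -1) /\ (a = FT -> t = 1) /\ (a = TF -> t = -1).

Lemma word_sign_fits m w a :
  In w (admissible_words m) -> In a w -> letter_fits a (word_sign w).
Proof.
  intros Hw Ha. apply In_admissible_words in Hw. destruct Hw as [_ N].
  assert (E : existsb (fun a => andb (fst a) (negb (snd a))) w = true <-> In TF w).
  { rewrite existsb_exists. split.
    - intros [[[|] [|]] [H F]]; simpl in F; try discriminate; auto.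
    - intros H. exists TF; split; auto. }
  unfold letter_fits, word_sign.
  destruct (existsb _ w) eqn:Ew; repeat split; auto; intros F; subst.
  - exfalso. apply N. split; auto. apply E; auto.
  - exfalso. apply E in Ha. discriminate.
Qed.

Lemma letter_value_code a t :
  letter_fits a t -> (posb (letter_value a - t), posb (letter_value a + t)) = a.
Proof.
  intros [T [F1 F2]]. destruct a as [[|] [|]]; unfold letter_value; simpl.
  - f_equal; apply posb_true; lra.
  - specialize (F2 eq_refl). subst. f_equal; [apply posb_true|apply posb_false]; lra.
  - specialize (F1 eq_refl). subst. f_equal; [apply posb_false|apply posb_true]; lra.
  - f_equal; apply posb_false; lra.
Qed.

Lemma letter_value_nonzero a t :
  (t = 1 \/ t = -1) -> letter_value a - t <> 0 /\ letter_value a + t <> 0.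
Proof. intros T. destruct a as [[|] [|]]; unfold letter_value; simpl; lra. Qed.

Lemma list_prod_NoDup {A B : Type} (l1 : list A) (l2 : list B) :
  NoDup l1 -> NoDup l2 -> NoDup (list_prod l1 l2).
Proof.
  intros D1 D2. induction D1; simpl. constructor.
  apply NoDup_app; auto.
  - apply FinFun.Injective_map_NoDup; auto. intros u v E; injection E; auto.
  - intros p K1 K2. apply in_map_iff in K1. destruct K1 as [y [E _]]. subst.
    apply in_prod_iff in K2. tauto.
Qed.

Section PlusShards.

Variables n i j : nat.
Hypothesis Hi : (1 <= i)%nat.
Hypothesis Hij : (i < j)%nat.
Hypothesis Hjn : (j <= n)%nat.

Definition plus_code (x : vec) : list bool * list (bool * bool) :=
  (map (fun k => posb (x k - x j)) (seq (S i) (j - i - 1)),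
   map (fun k => (posb (x k - x j), posb (x k + x j))) (seq 1 (i - 1))).

Definition plus_codes : list (list bool * list (bool * bool)) :=
  list_prod (bits (j - i - 1)) (admissible_words (i - 1)).

Definition plus_rep (c : list bool * list (bool * bool)) : vec :=
  fun k => if Nat.eqb k j then word_sign (snd c)
   else if Nat.eqb k i then - word_sign (snd c)
   else if andb (Nat.ltb i k) (Nat.ltb k j)
        then word_sign (snd c) + (if nth (k - S i) (fst c) false then 1 else -1)
   else if andb (Nat.leb 1 k) (Nat.ltb k i) then letter_value (nth (k - 1) (snd c) FF)
   else 0.

Ltac nats := repeat match goal with
  | |- context [Nat.eqb ?a ?b] => destruct (Nat.eqb_spec a b)
  | |- context [Nat.ltb ?a ?b] => destruct (Nat.ltb_spec a b)
  | |- context [Nat.leb ?a ?b] => destruct (Nat.leb_spec a b) end;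
  simpl; try lia; auto.

Lemma plus_rep_j c : plus_rep c j = word_sign (snd c).
Proof. unfold plus_rep. nats. Qed.
Lemma plus_rep_i c : plus_rep c i = - word_sign (snd c).
Proof. unfold plus_rep. nats. Qed.
Lemma plus_rep_mid c k : (i < k < j)%nat ->
  plus_rep c k = word_sign (snd c) + (if nth (k - S i) (fst c) false then 1 else -1).
Proof. intros. unfold plus_rep. nats. Qed.
Lemma plus_rep_low c k : (1 <= k < i)%nat -> plus_rep c k = letter_value (nth (k - 1) (snd c) FF).
Proof. intros. unfold plus_rep. nats. Qed.
Lemma plus_rep_out c k : (k = 0 \/ j < k)%nat -> plus_rep c k = 0.
Proof. intros. unfold plus_rep. nats. Qed.

Lemma word_sign_values w : word_sign w = 1 \/ word_sign w = -1.
Proof. unfold word_sign. destruct (existsb _ w); auto. Qed.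

Lemma plus_cell_facts x : shard_cell n (root_plus i j) x ->
  x i = - x j /\ (forall k, (i < k < j)%nat -> x k - x j <> 0) /\
  (forall k, (1 <= k < i)%nat -> x k - x j <> 0 /\ x k + x j <> 0).
Proof.
  intros Dx. apply shard_cell_iff in Dx. destruct Dx as [_ [Z C]].
  rewrite ip_plus in Z by lia.
  assert (Xi : x i = - x j) by lra. split; auto.
  assert (N : forall g, cuts n (PhiD n) g (root_plus i j) -> ip n x g <> 0).
  { intros g Cg. apply C; auto. apply (cut_properties n (root_plus i j)); auto. inphi. }
  split; [intros k Hk | intros k Hk; split];
    destruct (cut_plus_examples n i j k Hi Hij Hjn ltac:(lia)) as [_ [_ [C3 [C4 C5]]]].
  - specialize (N _ (C5 Hk)). rewrite ip_plus, Xi in N by lia. lra.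
  - specialize (N _ (C4 ltac:(lia))). rewrite ip_plus, Xi in N by lia. lra.
  - specialize (N _ (C3 ltac:(lia))). rewrite ip_plus in N by lia. lra.
Qed.

(** The signs of all cutting forms on the shard cell are determined by the
    signs of x_k - x_j (k < j, k <> i) and x_k + x_j (k < i). *)
Definition plus_forms_agree (x y : vec) : Prop :=
  (forall k, (i < k < j)%nat -> (0 < x k - x j <-> 0 < y k - y j)) /\
  (forall k, (1 <= k < i)%nat ->
     (0 < x k - x j <-> 0 < y k - y j) /\ (0 < x k + x j <-> 0 < y k + y j)).

Lemma plus_side_forms x y :
  shard_cell n (root_plus i j) x -> shard_cell n (root_plus i j) y ->
  shard_side n (root_plus i j) x y -> plus_forms_agree x y.
Proof.
  intros Dx Dy S. destruct (plus_cell_facts x Dx) as [Xi _], (plus_cell_facts y Dy) as [Yi _].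
  assert (Cut : forall g, cuts n (PhiD n) g (root_plus i j) -> In g (PhiD n))
    by (intros g Cg; apply (cut_properties n (root_plus i j)); auto; inphi).
  split; [intros k Hk | intros k Hk; split];
    destruct (cut_plus_examples n i j k Hi Hij Hjn ltac:(lia)) as [_ [_ [C3 [C4 C5]]]].
  - assert (Ck := C5 Hk). specialize (S _ (Cut _ Ck) Ck).
    rewrite !ip_plus, Xi, Yi in S by lia. rewrite <- !Rminus_def in S. exact S.
  - assert (Ck := C4 ltac:(lia)). specialize (S _ (Cut _ Ck) Ck).
    rewrite !ip_plus, Xi, Yi in S by lia.
    replace (x k - x j) with (- x j + x k) by ring. replace (y k - y j) with (- y j + y k) by ring.
    auto.
  - assert (Ck := C3 ltac:(lia)). specialize (S _ (Cut _ Ck) Ck).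
    rewrite !ip_plus in S by lia. rewrite (Rplus_comm (x k)), (Rplus_comm (y k)). auto.
Qed.

Lemma plus_forms_side x y :
  shard_cell n (root_plus i j) x -> shard_cell n (root_plus i j) y ->
  plus_forms_agree x y -> shard_side n (root_plus i j) x y.
Proof.
  intros Dx Dy [Am Al] g _ Cg.
  destruct (plus_cell_facts x Dx) as [Xi [Xm Xl]], (plus_cell_facts y Dy) as [Yi [Ym Yl]].
  destruct (cut_plus_classify n i j g Hi Hij Hjn Cg)
    as [k [Hk1 [[Hk [Hki E]]|[[Hk E]|[[Hk E]|[[Hk E]|[Hk E]]]]]]];
    subst g; first [rewrite !ip_plus by lia | rewrite !ip_minus by lia]; rewrite ?Xi, ?Yi.
  - replace (x j - x k) with (- (x k - x j)) by ring.
    replace (y j - y k) with (- (y k - y j)) by ring.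
    destruct (Nat.lt_ge_cases k i).
    + apply pos_opp_iff; [apply Al| apply Xl | apply Yl]; lia.
    + apply pos_opp_iff; [apply Am| apply Xm | apply Ym]; lia.
  - replace (- x j - x k) with (- (x k + x j)) by ring.
    replace (- y j - y k) with (- (y k + y j)) by ring.
    apply pos_opp_iff; [apply Al| apply Xl | apply Yl]; lia.
  - rewrite (Rplus_comm (x j)), (Rplus_comm (y j)). apply Al; lia.
  - replace (- x j + x k) with (x k - x j) by ring.
    replace (- y j + y k) with (y k - y j) by ring. apply Al; lia.
  - replace (x k + - x j) with (x k - x j) by ring.
    replace (y k + - y j) with (y k - y j) by ring. apply Am; lia.
Qed.

Lemma plus_side_code x y :
  shard_cell n (root_plus i j) x -> shard_cell n (root_plus i j) y ->
  (shard_side n (root_plus i j) x y <-> plus_code x = plus_code y).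
Proof.
  intros Dx Dy. transitivity (plus_forms_agree x y).
  { split; [apply plus_side_forms | apply plus_forms_side]; auto. }
  unfold plus_forms_agree, plus_code. rewrite pair_equal_spec, !map_ext_in_iff. split.
  - intros [Am Al]; split; intros k Hk; apply in_seq in Hk.
    + apply posb_eq_iff, Am; lia.
    + apply pair_equal_spec; split; apply posb_eq_iff, Al; lia.
  - intros [Em El]; split; intros k Hk.
    + apply posb_eq_iff, Em, in_seq; lia.
    + specialize (El k ltac:(apply in_seq; lia)). apply pair_equal_spec in El.
      destruct El. split; apply posb_eq_iff; auto.
Qed.

(** The word of a point is admissible: FT at k forces x_j > 0 and TF at k'
    forces x_j < 0. *)
Lemma plus_code_in x : shard_cell n (root_plus i j) x -> In (plus_code x) plus_codes.
Proof.
  intros Dx. destruct (plus_cell_facts x Dx) as [_ [_ Xl]].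
  unfold plus_codes, plus_code. apply in_prod_iff. split.
  - apply In_bits. rewrite length_map, length_seq; auto.
  - apply In_admissible_words. split. { rewrite length_map, length_seq; auto. }
    intros [K1 K2]. apply in_map_iff in K1. apply in_map_iff in K2.
    destruct K1 as [k [E1 Hk]]. destruct K2 as [k' [E2 Hk']].
    apply in_seq in Hk. apply in_seq in Hk'.
    unfold FT in E1; unfold TF in E2. injection E1; injection E2; intros A1 A2 A3 A4.
    apply posb_false in A4. apply posb_true in A3. apply posb_true in A2. apply posb_false in A1.
    pose proof (proj1 (Xl k ltac:(lia))). lra.
Qed.

(** Every code gives a point of the shard cell: with x_j = t = +-1 all
    cutting forms take values in {+-1, +-2, +-3}. *)
Lemma plus_rep_cell c : shard_cell n (root_plus i j) (plus_rep c).
Proof.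
  destruct c as [s w]. pose proof (word_sign_values w) as T.
  assert (Low : forall k, (1 <= k < i)%nat ->
            plus_rep (s, w) k - word_sign w <> 0 /\ plus_rep (s, w) k + word_sign w <> 0)
    by (intros k Hk; rewrite plus_rep_low by lia; apply letter_value_nonzero; auto).
  assert (Mid : forall k, (i < k < j)%nat -> plus_rep (s, w) k - word_sign w <> 0)
    by (intros k Hk; rewrite plus_rep_mid by lia; simpl; destruct (nth _ s false); lra).
  apply shard_cell_iff. split; [|split].
  - intros k Hk. apply plus_rep_out; lia.
  - rewrite ip_plus, plus_rep_j, plus_rep_i by lia. ring.
  - intros g _ Cg.
    destruct (cut_plus_classify n i j g Hi Hij Hjn Cg)
      as [k [Hk1 [[Hk [Hki E]]|[[Hk E]|[[Hk E]|[[Hk E]|[Hk E]]]]]]];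
      subst g; first [rewrite !ip_plus by lia | rewrite !ip_minus by lia];
      rewrite ?plus_rep_j, ?plus_rep_i; simpl.
    + destruct (Nat.lt_ge_cases k i);
        [pose proof (Low k ltac:(lia)) | pose proof (Mid k ltac:(lia))]; lra.
    + pose proof (Low k ltac:(lia)). lra.
    + pose proof (Low k ltac:(lia)). lra.
    + pose proof (Low k ltac:(lia)). lra.
    + pose proof (Mid k ltac:(lia)). lra.
Qed.

Lemma plus_code_rep c : In c plus_codes -> plus_code (plus_rep c) = c.
Proof.
  destruct c as [s w]. intros Hc. apply in_prod_iff in Hc. destruct Hc as [Hs Hw].
  apply In_bits in Hs.
  unfold plus_code. rewrite plus_rep_j. simpl. f_equal.
  - transitivity (map (fun k => nth (k - S i) s false) (seq (S i) (length s)));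
      [|apply map_nth_seq].
    rewrite Hs. apply map_ext_in. intros k Hk. apply in_seq in Hk.
    rewrite plus_rep_mid by lia. simpl.
    destruct (nth (k - S i) s false); [apply posb_true|apply posb_false]; lra.
  - assert (Lw : length w = (i - 1)%nat) by (apply In_admissible_words in Hw; apply Hw).
    transitivity (map (fun k => nth (k - 1) w FF) (seq 1 (length w))); [|apply map_nth_seq].
    rewrite Lw. apply map_ext_in. intros k Hk. apply in_seq in Hk.
    rewrite plus_rep_low by lia. simpl.
    apply letter_value_code. apply (word_sign_fits (i - 1)); auto. apply nth_In. lia.
Qed.

Lemma shards_plus_codes :
  num_sets (is_shard_of n (PhiD n) (root_plus i j))
           (2 ^ (j - i - 1) * (2 * 3 ^ (i - 1) - 2 ^ (i - 1)))%nat.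
Proof.
  rewrite <- bits_length, <- admissible_words_length, <- length_prod.
  apply (count_shards n _ plus_codes (nil, nil) plus_rep plus_code).
  - apply list_prod_NoDup. apply bits_NoDup. apply admissible_words_NoDup.
  - apply plus_side_code.
  - apply plus_code_in.
  - intros c _. apply plus_rep_cell.
  - apply plus_code_rep.
Qed.

End PlusShards.

Close Scope R_scope.
(** ** Counting *)

Definition shard_count (i j : nat) : nat :=
  2 ^ (j - i - 1) + 2 ^ (j - i) * 3 ^ (i - 1) - 2 ^ (j - 2).

Lemma plus_count_eq a m : 2 ^ a * (2 * 3 ^ m - 2 ^ m) = 2 ^ (S a) * 3 ^ m - 2 ^ (a + m).
Proof.
  assert (H : 2 ^ m <= 3 ^ m) by (apply Nat.pow_le_mono_l; lia).
  rewrite Nat.mul_sub_distr_l, Nat.pow_add_r. simpl. f_equal. lia.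
Qed.

Lemma shards_plus n i j : 1 <= i -> i < j -> j <= n ->
  num_sets (is_shard_of n (PhiD n) (root_plus i j)) (2 ^ (j - i) * 3 ^ (i - 1) - 2 ^ (j - 2)).
Proof.
  intros Hi Hij Hjn. pose proof (shards_plus_codes n i j Hi Hij Hjn) as Hs.
  rewrite (plus_count_eq (j - i - 1) (i - 1)) in Hs.
  replace (S (j - i - 1)) with (j - i) in Hs by lia.
  replace (j - i - 1 + (i - 1)) with (j - 2) in Hs by lia. exact Hs.
Qed.

Lemma list_sum_map_add {A : Type} (f g : A -> nat) l :
  list_sum (map f l) + list_sum (map g l) = list_sum (map (fun x => f x + g x) l).
Proof. induction l; simpl; lia. Qed.

Lemma list_sum_map_mul {A : Type} (f : A -> nat) c l :
  list_sum (map (fun x => c * f x) l) = c * list_sum (map f l).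
Proof. induction l; simpl; lia. Qed.

Lemma list_sum_const {A : Type} (c : nat) (l : list A) :
  list_sum (map (fun _ => c) l) = length l * c.
Proof. induction l; simpl; lia. Qed.

Lemma list_sum_ext {A : Type} (f g : A -> nat) l :
  (forall x, In x l -> f x = g x) -> list_sum (map f l) = list_sum (map g l).
Proof. intros H. f_equal. apply map_ext_in; auto. Qed.

Lemma list_sum_snoc {A : Type} (f : A -> nat) l a :
  list_sum (map f (l ++ a :: nil)) = list_sum (map f l) + f a.
Proof. rewrite map_app, list_sum_app. simpl. lia. Qed.

Lemma list_sum_flat_map {A B : Type} (N : B -> nat) (f : A -> list B) l :
  list_sum (map N (flat_map f l)) = list_sum (map (fun x => list_sum (map N (f x))) l).
Proof. induction l; simpl; auto. rewrite map_app, list_sum_app, IHl. auto. Qed.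

Lemma sum_pow2 m : list_sum (map (fun i => 2 ^ (m - i)) (seq 1 m)) + 1 = 2 ^ m.
Proof.
  induction m. { simpl; auto. }
  rewrite seq_S, list_sum_snoc.
  rewrite (list_sum_ext _ (fun i => 2 * 2 ^ (m - i))).
  - rewrite list_sum_map_mul. replace (S m - (1 + m)) with 0 by lia. simpl in *. lia.
  - intros i Hi. apply in_seq in Hi. replace (S m - i) with (S (m - i)) by lia. auto.
Qed.

Lemma sum_pow2_pow3 m :
  list_sum (map (fun i => 2 ^ (S m - i) * 3 ^ (i - 1)) (seq 1 m)) + 2 ^ (S m) = 2 * 3 ^ m.
Proof.
  induction m. { simpl; auto. }
  rewrite seq_S, list_sum_snoc.
  rewrite (list_sum_ext _ (fun i => 2 * (2 ^ (S m - i) * 3 ^ (i - 1)))).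
  - rewrite list_sum_map_mul. replace (S (S m) - (1 + m)) with 1 by lia.
    replace (1 + m - 1) with m by lia. simpl in *. lia.
  - intros i Hi. apply in_seq in Hi. replace (S (S m) - i) with (S (S m - i)) by lia. simpl. lia.
Qed.

(** The subtraction in [shard_count] is not truncated. *)
Lemma shard_count_no_truncation i m : 1 <= i <= m ->
  2 ^ (m - 1) <= 2 ^ (S m - i) * 3 ^ (i - 1).
Proof.
  intros H. apply (Nat.le_trans _ (2 ^ (S m - i) * 2 ^ (i - 1))).
  - rewrite <- Nat.pow_add_r. apply Nat.pow_le_mono_r; lia.
  - apply Nat.mul_le_mono_l, Nat.pow_le_mono_l. lia.
Qed.

Lemma inner_sum_closed m : 1 <= m ->
  list_sum (map (fun i => shard_count i (S m)) (seq 1 m)) + (m + 2) * 2 ^ (m - 1) + 1 = 2 * 3 ^ m.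
Proof.
  intros Hm.
  assert (E : list_sum (map (fun i => shard_count i (S m)) (seq 1 m)) +
              list_sum (map (fun _ => 2 ^ (m - 1)) (seq 1 m)) =
              list_sum (map (fun i => 2 ^ (m - i)) (seq 1 m)) +
              list_sum (map (fun i => 2 ^ (S m - i) * 3 ^ (i - 1)) (seq 1 m))).
  { rewrite !list_sum_map_add. apply list_sum_ext. intros i Hi. apply in_seq in Hi.
    unfold shard_count. pose proof (shard_count_no_truncation i m ltac:(lia)).
    replace (S m - i - 1) with (m - i) by lia. replace (S m - 2) with (m - 1) by lia. lia. }
  rewrite list_sum_const, length_seq in E. pose proof (sum_pow2 m). pose proof (sum_pow2_pow3 m).
  destruct m. lia. replace (S m - 1) with m in * by lia.
  simpl (2 ^ S (S m)) in *. simpl (2 ^ S m) in *. lia.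
Qed.

Lemma sum_pairs_closed n : sum_pairs n shard_count + n * 2 ^ (n - 1) + n + 1 = 3 ^ n.
Proof.
  induction n. { simpl; auto. }
  unfold sum_pairs in *. rewrite seq_S, list_sum_snoc.
  replace (1 + n - 1) with n by lia. replace (1 + n) with (S n) by lia.
  destruct n. { simpl. auto. }
  pose proof (inner_sum_closed (S n) ltac:(lia)).
  replace (S (S n) - 1) with (S n) by lia. replace (S n - 1) with n in * by lia.
  simpl (2 ^ S n). simpl (3 ^ S (S n)). simpl (3 ^ S n) in *. nia.
Qed.

Definition root_of (c : nat * nat * bool) : vec :=
  match c with (i, j, t) => if t then root_plus i j else root_minus i j end.

Definition hyperplane_count (c : nat * nat * bool) : nat :=
  match c with
  | (i, j, true) => 2 ^ (j - i) * 3 ^ (i - 1) - 2 ^ (j - 2)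
  | (i, j, false) => 2 ^ (j - i - 1)
  end.

Definition hyperplane_indices (n : nat) : list (nat * nat * bool) :=
  flat_map (fun j => flat_map (fun i => (i, j, false) :: (i, j, true) :: nil)
                              (seq 1 (j - 1))) (seq 1 n).

Lemma In_hyperplane_indices n c : In c (hyperplane_indices n) <->
  exists i j t, c = (i, j, t) /\ 1 <= i /\ i < j /\ j <= n.
Proof.
  unfold hyperplane_indices. rewrite in_flat_map. split.
  - intros [j [Hj Hc]]. apply in_seq in Hj. apply in_flat_map in Hc.
    destruct Hc as [i [Hi Hc]]. apply in_seq in Hi.
    simpl in Hc. destruct Hc as [E|[E|[]]]; subst; do 3 eexists; (split; [reflexivity|lia]).
  - intros [i [j [t [E [H1 [H2 H3]]]]]]. subst. exists j. split. apply in_seq; lia.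
    apply in_flat_map. exists i. split. apply in_seq; lia. destruct t; simpl; auto.
Qed.

Lemma root_of_In n c : In c (hyperplane_indices n) -> In (root_of c) (PhiD n).
Proof.
  intros Hc. apply In_hyperplane_indices in Hc. destruct Hc as [i [j [t [E ?]]]]. subst.
  destruct t; simpl; inphi.
Qed.

Lemma root_of_inj c c' : (exists i j t, c = (i, j, t) /\ 1 <= i /\ i < j) ->
  (exists i j t, c' = (i, j, t) /\ 1 <= i /\ i < j) -> root_of c = root_of c' -> c = c'.
Proof.
  intros [i [j [t [? ?]]]] [k [l [t' [? ?]]]] E. subst.
  assert (V : forall a b s m, root_of (a, b, s) m =
            ((if Nat.eqb m b then 1 else 0) +
             (if s then 1 else -1) * (if Nat.eqb m a then 1 else 0))%R).
  { intros. destruct s; simpl; unfold root_minus, root_plus, vsub, vadd, eps; ring. }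
  assert (F := fun m => equal_f E m). setoid_rewrite V in F.
  assert (j = l) as <-.
  { pose proof (F j) as Fj. pose proof (F l) as Fl. revert Fj Fl.
    eqbs; try lia; destruct t, t'; lra. }
  assert (i = k) as <-.
  { pose proof (F i) as Fi. pose proof (F k) as Fk. revert Fi Fk.
    eqbs; try lia; destruct t, t'; lra. }
  pose proof (F i) as Fi. revert Fi. eqbs; try lia. destruct t, t'; auto; lra.
Qed.

Lemma NoDup_flat_map_disjoint {A B : Type} (f : A -> list B) l : NoDup l ->
  (forall x, In x l -> NoDup (f x)) ->
  (forall x y z, In x l -> In y l -> x <> y -> In z (f x) -> ~ In z (f y)) ->
  NoDup (flat_map f l).
Proof.
  induction l as [|a l IH]; intros ND H D; simpl. constructor. inversion ND; subst.
  apply NoDup_app.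
  - apply H; simpl; auto.
  - apply IH; auto. intros; apply H; simpl; auto. intros x y z Hx Hy; apply D; simpl; auto.
  - intros z Z1 Z2. apply in_flat_map in Z2. destruct Z2 as [y [Hy Z2]].
    apply (D a y z); simpl; auto. intros E; subst; contradiction.
Qed.

Lemma hyperplane_indices_NoDup n : NoDup (hyperplane_indices n).
Proof.
  unfold hyperplane_indices. apply NoDup_flat_map_disjoint. apply seq_NoDup.
  - intros j _. apply NoDup_flat_map_disjoint. apply seq_NoDup.
    + intros i _. repeat constructor; simpl; intuition discriminate.
    + intros i i' z _ _ N Z1 Z2. simpl in Z1, Z2.
      destruct Z1 as [E|[E|[]]]; destruct Z2 as [F|[F|[]]]; subst;
        try discriminate; injection F; intros; subst; auto.
  - intros j j' z _ _ N Z1 Z2. apply in_flat_map in Z1. apply in_flat_map in Z2.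
    destruct Z1 as [i [_ Z1]]. destruct Z2 as [i' [_ Z2]]. simpl in Z1, Z2.
    destruct Z1 as [E|[E|[]]]; destruct Z2 as [F|[F|[]]]; subst;
      try discriminate; injection F; intros; subst; auto.
Qed.

Lemma shards_total n : num_sets (is_shard n (PhiD n)) (sum_pairs n shard_count).
Proof.
  assert (Sum : list_sum (map hyperplane_count (hyperplane_indices n)) = sum_pairs n shard_count).
  { unfold hyperplane_indices, sum_pairs. rewrite list_sum_flat_map. f_equal.
    apply map_ext_in. intros j Hj. apply in_seq in Hj.
    rewrite list_sum_flat_map. f_equal. apply map_ext_in. intros i Hi. apply in_seq in Hi.
    simpl. unfold shard_count.
    pose proof (shard_count_no_truncation i (j - 1) ltac:(lia)) as T.
    replace (S (j - 1) - i) with (j - i) in T by lia.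
    replace (j - 1 - 1) with (j - 2) in T by lia. lia. }
  rewrite <- Sum.
  apply (num_sets_ext (fun S => exists c, In c (hyperplane_indices n) /\
                                          is_shard_of n (PhiD n) (root_of c) S)).
  - intros S. unfold is_shard. split.
    + intros [c [Hc P]]. exists (root_of c). split; auto. apply root_of_In; auto.
    + intros [b [Hb P]]. apply In_PhiD in Hb. destruct Hb as [i [j [? [? [? [E|E]]]]]]; subst.
      * exists (i, j, false). split; auto. apply In_hyperplane_indices. exists i, j, false; auto.
      * exists (i, j, true). split; auto. apply In_hyperplane_indices. exists i, j, true; auto.
  - apply num_sets_union. apply hyperplane_indices_NoDup.
    + intros c Hc. apply In_hyperplane_indices in Hc. destruct Hc as [i [j [t [E [? [? ?]]]]]].
      subst. destruct t; simpl. apply shards_plus; auto. apply shards_minus; auto.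
    + intros c c' S S' Hc Hc' P P' E.
      apply root_of_inj.
      * apply In_hyperplane_indices in Hc. destruct Hc as [i [j [t [? ?]]]].
        exists i, j, t; intuition.
      * apply In_hyperplane_indices in Hc'. destruct Hc' as [i [j [t [? ?]]]].
        exists i, j, t; intuition.
      * apply (shards_of_distinct_hyperplanes n _ _ S S'); auto; apply root_of_In; auto.
Qed.

Theorem mainTheorem10 (n : nat) (hn : (2 <= n)%nat) :
  (forall i j, (1 <= i)%nat -> (i < j)%nat -> (j <= n)%nat ->
     num_sets (is_shard_of n (PhiD n) (root_minus i j)) (2 ^ (j - i - 1))%nat) /\
  (forall i j, (1 <= i)%nat -> (i < j)%nat -> (j <= n)%nat ->
     num_sets (is_shard_of n (PhiD n) (root_plus i j))
              (2 ^ (j - i) * 3 ^ (i - 1) - 2 ^ (j - 2))%nat) /\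
  num_sets (is_shard n (PhiD n))
           (sum_pairs n (fun i j => 2 ^ (j - i - 1) + 2 ^ (j - i) * 3 ^ (i - 1) - 2 ^ (j - 2))%nat) /\
  sum_pairs n (fun i j => 2 ^ (j - i - 1) + 2 ^ (j - i) * 3 ^ (i - 1) - 2 ^ (j - 2))%nat
    = (3 ^ n - n * 2 ^ (n - 1) - n - 1)%nat.
Proof.
  split; [|split; [|split]].
  - intros i j Hi Hij Hjn. apply shards_minus; auto.
  - intros i j Hi Hij Hjn. apply shards_plus; auto.
  - apply shards_total.
  - pose proof (sum_pairs_closed n) as Closed. unfold shard_count in Closed. lia.
Qed.
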